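(* For every $m\ge1$ and every $X\in V_m\setminus V_0$, $\int_{\mathfrak{ST}}\psi^m_X\,d\mu=\dfrac{2}{4^{m+1}}$. Consequently, for every $u\in\mathrm{dom}\,\Delta$ and every $X\in V_\star\setminus V_0$, $$\Delta u(X)=2\lim_{m\to\infty}6^m\,\Delta_mu(X).$$
   Context: Let $P_0=(0,0,0)$, $P_1=(6^{1/3},0,6^{1/3})$, $P_2=(0,6^{1/3},6^{1/3})$, $P_3=(0,0,6^{1/3})$ in $\mathbb R^3$, $f_i(X)=(X+P_i)/2$, and $\mathfrak{ST}$ the unique nonempty compact set with $\mathfrak{ST}=\bigcup_{i=0}^3 f_i(\mathfrak{ST})$. For a word $\mathcal W\in\{0,1,2,3\}^m$, $f_{\mathcal W}=f_{\mathcal W_1}\circ\cdots\circ f_{\mathcal W_m}$. $V_0=\{P_0,\dots,P_3\}$, $V_m=\bigcup_{|\mathcal W|=m}f_{\mathcal W}(V_0)$, $V_\star=\bigcup_m V_m$. $X\sim_m Y$ means $X\ne Y$ and $X,Y\in f_{\mathcal W}(V_0)$ for some word $\mathcal W$ of length $m$. For $u,v:V_m\to\mathbb R$, $\mathcal E_m(u,v)=(3/2)^m\sum_{\{X,Y\}:X\sim_mY}(u(X)-u(Y))(v(X)-v(Y))$ (unordered pairs). For continuous $u$ on $\mathfrak{ST}$, $\mathcal E(u)=\lim_m\mathcal E_m(u|_{V_m},u|_{V_m})\in[0,\infty]$; $\mathrm{dom}\,\mathcal E=\{u\in C(\mathfrak{ST}):\mathcal E(u)<\infty\}$, $\mathcal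 E(u,v)=\lim_m\mathcal E_m(u|_{V_m},v|_{V_m})$, $\mathrm{dom}_0\,\mathcal E=\{u\in\mathrm{dom}\,\mathcal E:u|_{V_0}=0\}$. $\mu$ is the Borel probability measure on $\mathfrak{ST}$ with $\mu=\frac14\sum_i\mu\circ f_i^{-1}$. $\mathrm{dom}\,\Delta$ is the set of $u\in\mathrm{dom}\,\mathcal E$ for which there is a continuous $f$ with $\mathcal E(u,v)=-\int_{\mathfrak{ST}}vf\,d\mu$ for all $v\in\mathrm{dom}_0\,\mathcal E$; then $\Delta u:=f$. For $u:V_m\to\mathbb R$, $X\in V_m\setminus V_0$: $\Delta_mu(X)=\sum_{Y\sim_mX}(u(Y)-u(X))$. For $X\in V_m$, $\psi^m_X$ is the continuous function with $\psi^m_X(Y)=\delta_{XY}$ for $Y\in V_m$ such that for every $k\ge m$, $\psi^m_X|_{V_{k+1}}$ is the extension of $\psi^m_X|_{V_k}$ minimizing $\sum_{\{Y,Z\}:Y\sim_{k+1}Z}(w(Y)-w(Z))^2$. *)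

From Stdlib Require Import Reals Lra List Bool.
Import ListNotations.
Open Scope R_scope.
Local Open Scope bool_scope.

Definition pt : Type := (R * R * R)%type.

Definition padd (x y : pt) : pt :=
  match x, y with (a1, a2, a3), (b1, b2, b3) => (a1 + b1, a2 + b2, a3 + b3) end.
Definition pscale (c : R) (x : pt) : pt :=
  match x with (a1, a2, a3) => (c * a1, c * a2, c * a3) end.
Definition pnorm (x : pt) : R :=
  match x with (a1, a2, a3) => sqrt (a1 * a1 + a2 * a2 + a3 * a3) end.
Definition pdist (x y : pt) : R := pnorm (padd x (pscale (-1) y)).

Definition pt_eq_dec (x y : pt) : {x = y} + {x <> y}.
Proof. repeat (decide equality; try apply Req_EM_T). Defined.

Definition inb (X : pt) (l : list pt) : bool :=
  existsb (fun Y => if pt_eq_dec X Y then true else false) l.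

Definition a6 : R := Rpower 6 (1/3).
Definition P (i : nat) : pt :=
  match i with
  | 0%nat => (0, 0, 0)
  | 1%nat => (a6, 0, a6)
  | 2%nat => (0, a6, a6)
  | _ => (0, 0, a6)
  end.
Definition fmap (i : nat) (x : pt) : pt := pscale (1/2) (padd x (P i)).

Definition fW (w : list nat) (x : pt) : pt := fold_right fmap x w.
Fixpoint words (m : nat) : list (list nat) :=
  match m with
  | 0%nat => [[]]
  | S k => flat_map (fun w => map (fun i => i :: w) [0;1;2;3]%nat) (words k)
  end.
Definition cell (w : list nat) : list pt := map (fun i => fW w (P i)) [0;1;2;3]%nat.

Definition Vm (m : nat) : list pt := nodup pt_eq_dec (flat_map cell (words m)).
Definition Vstar (X : pt) : Prop := exists m, In X (Vm m).

Definition adj (m : nat) (X Y : pt) : bool :=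
  negb (if pt_eq_dec X Y then true else false) &&
  existsb (fun w => inb X (cell w) && inb Y (cell w)) (words m).

Fixpoint upairs (l : list pt) : list (pt * pt) :=
  match l with
  | [] => []
  | x :: t => map (fun y => (x, y)) t ++ upairs t
  end.

Definition sumR {A} (F : A -> R) (l : list A) : R := fold_right Rplus 0 (map F l).

Definition Eraw (m : nat) (u v : pt -> R) : R :=
  sumR (fun p : pt * pt => (u (fst p) - u (snd p)) * (v (fst p) - v (snd p)))
       (filter (fun p : pt * pt => adj m (fst p) (snd p)) (upairs (Vm m))).
Definition Em (m : nat) (u v : pt -> R) : R := (3/2) ^ m * Eraw m u v.

Definition Lapm (m : nat) (u : pt -> R) (X : pt) : R :=
  sumR (fun Y => u Y - u X) (filter (fun Y => adj m X Y) (Vm m)).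

Definition bounded (K : pt -> Prop) : Prop := exists M, forall x, K x -> pnorm x <= M.
Definition closed (K : pt -> Prop) : Prop :=
  forall (s : nat -> pt) x, (forall n, K (s n)) -> Un_cv (fun n => pdist (s n) x) 0 -> K x.
Definition is_attractor (K : pt -> Prop) : Prop :=
  (exists x, K x) /\ bounded K /\ closed K /\
  forall x, K x <-> exists i y, (i < 4)%nat /\ K y /\ x = fmap i y.

Definition contK (K : pt -> Prop) (u : pt -> R) : Prop :=
  forall x, K x -> forall eps, 0 < eps -> exists delta, 0 < delta /\
    forall y, K y -> pdist y x < delta -> Rabs (u y - u x) < eps.

(** I g = integral of g (continuous on K) against a Borel probability measure mu
    on K with mu = 1/4 sum_i mu o f_i^{-1}; by the Riesz representation theorem
    such mu are exactly the positive normalised linear functionals on C(K)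
    with the self-similarity identity below. *)
Definition is_ss_integral (K : pt -> Prop) (I : (pt -> R) -> R) : Prop :=
  (forall g h a b, contK K g -> contK K h ->
     I (fun x => a * g x + b * h x) = a * I g + b * I h) /\
  (forall g, contK K g -> (forall x, K x -> 0 <= g x) -> 0 <= I g) /\
  I (fun _ => 1) = 1 /\
  (forall g, contK K g ->
     I g = / 4 * sumR (fun i => I (fun x => g (fmap i x))) [0;1;2;3]%nat).

Definition domE (K : pt -> Prop) (u : pt -> R) : Prop :=
  contK K u /\ exists l, Un_cv (fun m => Em m u u) l.
Definition dom0E (K : pt -> Prop) (v : pt -> R) : Prop :=
  domE K v /\ forall X, In X (Vm 0) -> v X = 0.

Definition is_Laplacian (K : pt -> Prop) (I : (pt -> R) -> R) (u f : pt -> R) : Prop :=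
  domE K u /\ contK K f /\
  forall v, dom0E K v -> Un_cv (fun m => Em m u v) (- I (fun x => v x * f x)).

Definition is_psi (K : pt -> Prop) (m : nat) (X : pt) (psi : pt -> R) : Prop :=
  contK K psi /\
  (forall Y, In Y (Vm m) -> psi Y = if pt_eq_dec X Y then 1 else 0) /\
  (forall k, (m <= k)%nat -> forall w : pt -> R,
     (forall Y, In Y (Vm k) -> w Y = psi Y) ->
     Eraw (S k) psi psi <= Eraw (S k) w w).

(** The cells [f_w(T)], [|w| = m], of the tetrahedron [T] spanned by [V_0]
    meet only at vertices, and a point of [V_m] outside [V_0] is a corner of
    exactly two of them.  Self-similarity gives
    [int psi = 4^-m sum_w int (psi o f_w)]; energy minimality forces the
    midpoint rule [(2 c_i + 2 c_j + c_k + c_l) / 6] on every cell of level at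
    least [m], so each [psi o f_w] is harmonic, and the integral of a harmonic
    function is the mean of its four corner values (the midpoint rule
    preserves this mean, and oscillations shrink by [2/3] per level).  The
    corner values of [psi] are [0] except at [X], which is a corner of two
    cells, so [int psi = 2 / 4^(m+1)].

    For the Laplacian, [psi^m_X] is built as the limit of the harmonic
    extensions of the indicator of [X] on [V_m]: it is continuous,
    nonnegative, supported within [2 a6 / 2^m] of [X], and its energies are
    constant from level [m] on.  Testing [Delta u = f] against it gives
    [(3/2)^m Lapm m u X = int psi f ~ f(X) int psi = f(X) 2 / 4^(m+1)],
    i.e. [6^m Lapm m u X -> f(X) / 2]. *)

From Stdlib Require Import Reals List Lra Lia Psatz ZArith FinFun Classical ClassicalEpsilon.
Import ListNotations.
Open Scope R_scope.

Notation idx4 := [0;1;2;3]%nat.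

Lemma Rabs_le_inv a b : Rabs a <= b -> - b <= a <= b.
Proof. unfold Rabs; destruct Rcase_abs; lra. Qed.

Section FiniteSums.
Context {A : Type}.
Implicit Types (F G : A -> R) (l : list A).

Lemma sumR_nil F : sumR F [] = 0.
Proof. reflexivity. Qed.

Lemma sumR_cons F x l : sumR F (x :: l) = F x + sumR F l.
Proof. reflexivity. Qed.

Lemma sumR_app F l1 l2 : sumR F (l1 ++ l2) = sumR F l1 + sumR F l2.
Proof. induction l1 as [|x l1 IH]; cbn [app]; rewrite ?sumR_nil, ?sumR_cons; [ring|]. rewrite IH; ring. Qed.

Lemma sumR_ext F G l : (forall x, In x l -> F x = G x) -> sumR F l = sumR G l.
Proof.
  induction l as [|x l IH]; intros H; [reflexivity|]. rewrite !sumR_cons, H, IH; auto with datatypes.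
Qed.

Lemma sumR_add F G l : sumR (fun x => F x + G x) l = sumR F l + sumR G l.
Proof. induction l as [|x l IH]; rewrite ?sumR_nil, ?sumR_cons; [ring|]. rewrite IH; ring. Qed.

Lemma sumR_sub F G l : sumR (fun x => F x - G x) l = sumR F l - sumR G l.
Proof. induction l as [|x l IH]; rewrite ?sumR_nil, ?sumR_cons; [ring|]. rewrite IH; ring. Qed.

Lemma sumR_opp F l : sumR (fun x => - F x) l = - sumR F l.
Proof. induction l as [|x l IH]; rewrite ?sumR_nil, ?sumR_cons; [ring|]. rewrite IH; ring. Qed.

Lemma sumR_scal_l F c l : sumR (fun x => c * F x) l = c * sumR F l.
Proof. induction l as [|x l IH]; rewrite ?sumR_nil, ?sumR_cons; [ring|]. rewrite IH; ring. Qed.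

Lemma sumR_scal_r F c l : sumR (fun x => F x * c) l = sumR F l * c.
Proof. induction l as [|x l IH]; rewrite ?sumR_nil, ?sumR_cons; [ring|]. rewrite IH; ring. Qed.

Lemma sumR_le F G l : (forall x, In x l -> F x <= G x) -> sumR F l <= sumR G l.
Proof.
  induction l as [|x l IH]; intros H; rewrite ?sumR_nil, ?sumR_cons; [lra|].
  apply Rplus_le_compat; auto with datatypes.
Qed.

Lemma sumR_const c l : sumR (fun _ => c) l = INR (length l) * c.
Proof.
  induction l as [|x l IH]; [rewrite sumR_nil; cbn; ring|]. rewrite sumR_cons, IH, length_cons, S_INR; ring.
Qed.

Lemma sumR_eq0 F l : (forall x, In x l -> F x = 0) -> sumR F l = 0.
Proof. intros H. rewrite (sumR_ext F (fun _ => 0)), sumR_const by auto. ring. Qed.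

Lemma sumR_ge0 F l : (forall x, In x l -> 0 <= F x) -> 0 <= sumR F l.
Proof. intros H. rewrite <- (sumR_eq0 (fun _ => 0) l) by auto. apply sumR_le; auto. Qed.

Lemma Rabs_sumR_le F l : Rabs (sumR F l) <= sumR (fun x => Rabs (F x)) l.
Proof.
  induction l as [|x l IH]; rewrite ?sumR_nil, ?sumR_cons; [rewrite Rabs_R0; lra|].
  eapply Rle_trans; [apply Rabs_triang|]. lra.
Qed.

Lemma sumR_filter F p l : sumR F (filter p l) = sumR (fun x => if p x then F x else 0) l.
Proof.
  induction l as [|x l IH]; [reflexivity|]. cbn [filter]. rewrite sumR_cons.
  destruct (p x); rewrite ?sumR_cons, IH; ring.
Qed.

Lemma sumR_term_le F l a : (forall x, In x l -> 0 <= F x) -> In a l -> F a <= sumR F l.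
Proof.
  induction l as [|b l IH]; intros H Ha; [destruct Ha|]. rewrite sumR_cons.
  assert (0 <= F b) by auto with datatypes.
  assert (0 <= sumR F l) by (apply sumR_ge0; auto with datatypes).
  destruct Ha as [->|Ha]; [lra|]. assert (F a <= sumR F l) by (apply IH; auto with datatypes). lra.
Qed.

Lemma sumR_neq0 F l : sumR F l <> 0 -> exists x, In x l /\ F x <> 0.
Proof.
  intros H. apply NNPP. intros Hno. apply H, sumR_eq0. intros x Hx.
  apply NNPP. intros Hx'. apply Hno. eauto.
Qed.

Lemma sumR_remove (dec : forall x y : A, {x = y} + {x <> y}) F l a :
  NoDup l -> In a l -> sumR F l = F a + sumR F (remove dec a l).
Proof.
  induction l as [|b l IH]; intros Hnd Hin; [destruct Hin|]. inversion Hnd; subst. cbn [remove].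
  destruct (dec a b) as [->|Hab].
  - rewrite notin_remove by auto. apply sumR_cons.
  - destruct Hin as [->|Hin]; [congruence|]. rewrite !sumR_cons, IH; auto. ring.
Qed.

Lemma NoDup_remove_dec (dec : forall x y : A, {x = y} + {x <> y}) a l :
  NoDup l -> NoDup (remove dec a l).
Proof.
  induction l as [|b l IH]; intros H; cbn; [constructor|]. inversion H; subst.
  destruct (dec a b); auto. constructor; auto. intros Hin. apply in_remove in Hin as [Hin _]; auto.
Qed.

Lemma sumR_two_terms (dec : forall x y : A, {x = y} + {x <> y}) F l a b :
  NoDup l -> In a l -> In b l -> a <> b ->
  sumR F l = F a + F b + sumR F (remove dec b (remove dec a l)).
Proof.
  intros Hnd Ha Hb Hab. rewrite (sumR_remove dec F l a), (sumR_remove dec F _ b); auto using NoDup_remove_dec.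
  - ring.
  - apply in_in_remove; auto.
Qed.

End FiniteSums.

Lemma sumR_map {A B} (F : B -> R) (g : A -> B) l : sumR F (map g l) = sumR (fun x => F (g x)) l.
Proof. unfold sumR. rewrite map_map. reflexivity. Qed.

Lemma sumR_flat_map {A B} (F : B -> R) (g : A -> list B) l :
  sumR F (flat_map g l) = sumR (fun x => sumR F (g x)) l.
Proof. induction l as [|x l IH]; [reflexivity|]. cbn [flat_map]. rewrite sumR_app, IH. reflexivity. Qed.

Lemma sumR_comm {A B} (F : A -> B -> R) l1 l2 :
  sumR (fun x => sumR (fun y => F x y) l2) l1 = sumR (fun y => sumR (fun x => F x y) l1) l2.
Proof.
  induction l1 as [|x l1 IH].
  - symmetry. apply sumR_eq0. reflexivity.
  - rewrite sumR_cons, IH, <- sumR_add. reflexivity.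
Qed.

Lemma sumR_idx4 (F : nat -> R) : sumR F idx4 = F 0%nat + F 1%nat + F 2%nat + F 3%nat.
Proof. unfold sumR; cbn. ring. Qed.

Lemma In_idx4 i : In i idx4 <-> (i < 4)%nat.
Proof. cbn. split; [intros [|[|[|[|[]]]]]; lia | intros; lia]. Qed.

Lemma NoDup_idx4 : NoDup idx4.
Proof. repeat constructor; cbn; intuition lia. Qed.

Lemma exists_pow_lt r eps : 0 <= r < 1 -> 0 < eps -> exists N, r ^ N < eps.
Proof.
  intros Hr Heps. destruct (pow_lt_1_zero r ltac:(rewrite Rabs_right; lra) eps Heps) as [N HN].
  exists N. specialize (HN N (le_n N)). rewrite Rabs_right in HN; auto. apply Rle_ge, pow_le; lra.
Qed.

Lemma exists_div_pow2_lt C eps : 0 < eps -> exists N, C / 2 ^ N < eps.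
Proof.
  intros Heps. destruct (cv_pow_half C eps Heps) as [N HN]. exists N.
  specialize (HN N (le_n N)). unfold R_dist in HN. rewrite Rminus_0_r in HN.
  eapply Rle_lt_trans; [apply Rle_abs|exact HN].
Qed.

Lemma pow_le_pow_lt1 r k n : 0 <= r <= 1 -> (k <= n)%nat -> r ^ n <= r ^ k.
Proof.
  intros Hr Hkn. replace n with (k + (n - k))%nat by lia. rewrite pow_add.
  assert (0 <= r ^ k) by (apply pow_le; lra).
  assert (r ^ (n - k) <= 1) by (rewrite <- (pow1 (n - k)); apply pow_incr; lra). nra.
Qed.

Lemma eq0_of_geom_bound z C r : 0 <= r < 1 -> (forall n, Rabs z <= C * r ^ n) -> z = 0.
Proof.
  intros Hr H. destruct (Req_dec z 0) as [|Hz]; auto. exfalso.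
  assert (Hpos : 0 < Rabs z) by (apply Rabs_pos_lt; auto). pose proof (Rabs_pos C).
  destruct (exists_pow_lt r (Rabs z / (Rabs C + 1)) Hr) as [N HN]; [apply Rdiv_lt_0_compat; lra|].
  specialize (H N). assert (0 <= r ^ N) by (apply pow_le; lra).
  assert (C * r ^ N <= Rabs C * r ^ N) by (apply Rmult_le_compat_r; [lra|apply Rle_abs]).
  apply (Rmult_lt_compat_l (Rabs C + 1)) in HN; [|lra].
  replace ((Rabs C + 1) * (Rabs z / (Rabs C + 1))) with (Rabs z) in HN by (field; lra).
  nra.
Qed.

Definition coord (k : nat) (x : pt) : R :=
  match k with 0%nat => fst (fst x) | 1%nat => snd (fst x) | _ => snd x end.

(** Coordinates of [P i] in units of [a6]. *)
Definition Pcoord (k i : nat) : Z :=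
  match k, i with
  | 0%nat, 1%nat => 1 | 0%nat, _ => 0
  | 1%nat, 2%nat => 1 | 1%nat, _ => 0
  | _, 0%nat => 0 | _, _ => 1
  end.

Lemma pt_ext (x y : pt) :
  coord 0 x = coord 0 y -> coord 1 x = coord 1 y -> coord 2 x = coord 2 y -> x = y.
Proof. destruct x as [[x1 x2] x3], y as [[y1 y2] y3]; cbn; intros -> -> ->; reflexivity. Qed.

Lemma a6_pos : 0 < a6.
Proof. apply exp_pos. Qed.

Lemma coord_P k i : coord k (P i) = a6 * IZR (Pcoord k i).
Proof. destruct k as [|[|k]], i as [|[|[|i]]]; cbn; ring. Qed.

Lemma coord_fmap k i x : coord k (fmap i x) = (coord k x + coord k (P i)) / 2.
Proof.
  destruct x as [[x1 x2] x3]; unfold fmap; destruct (P i) as [[p1 p2] p3].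
  destruct k as [|[|k]]; cbn; field.
Qed.

Lemma fW_cons i w x : fW (i :: w) x = fmap i (fW w x).
Proof. reflexivity. Qed.

Lemma fW_app v w x : fW (v ++ w) x = fW v (fW w x).
Proof. apply fold_right_app. Qed.

Lemma fW_snoc v i x : fW (v ++ [i]) x = fW v (fmap i x).
Proof. apply fW_app. Qed.

Lemma fmap_P_fixed i : fmap i (P i) = P i.
Proof. apply pt_ext; rewrite !coord_fmap; field. Qed.

Lemma fmap_P_comm i j : fmap i (P j) = fmap j (P i).
Proof. apply pt_ext; rewrite !coord_fmap; field. Qed.

Lemma fW_repeat_P j n : fW (repeat j n) (P j) = P j.
Proof. induction n as [|n IH]; [reflexivity|]. cbn [repeat]. rewrite fW_cons, IH. apply fmap_P_fixed. Qed.

Lemma P_inj i j : (i < 4)%nat -> (j < 4)%nat -> P i = P j -> i = j.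
Proof.
  intros Hi Hj H. pose proof a6_pos.
  assert (E0 := f_equal (coord 0) H). assert (E1 := f_equal (coord 1) H). assert (E2 := f_equal (coord 2) H).
  rewrite !coord_P in E0, E1, E2.
  destruct i as [|[|[|[|]]]], j as [|[|[|[|]]]]; try lia; cbn in *; nra.
Qed.

Definition fmap_inv (i : nat) (x : pt) : pt :=
  ((2 * coord 0 x - coord 0 (P i), 2 * coord 1 x - coord 1 (P i)), 2 * coord 2 x - coord 2 (P i)).

Lemma coord_fmap_inv k i x : coord k (fmap_inv i x) = 2 * coord k x - coord k (P i).
Proof. destruct k as [|[|k]]; reflexivity. Qed.

Lemma fmap_eq_iff i x y : fmap i y = x <-> y = fmap_inv i x.
Proof.
  split; intros H; subst; apply pt_ext; rewrite ?coord_fmap_inv, ?coord_fmap, ?coord_fmap_inv; field.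
Qed.

Lemma pdist_eq x y :
  pdist x y = sqrt ((coord 0 x - coord 0 y) ^ 2 + (coord 1 x - coord 1 y) ^ 2 + (coord 2 x - coord 2 y) ^ 2).
Proof.
  destruct x as [[x1 x2] x3], y as [[y1 y2] y3].
  unfold pdist, pnorm, padd, pscale; cbn. f_equal; ring.
Qed.

Lemma pnorm_pdist x : pnorm x = pdist x (P 0).
Proof. destruct x as [[x1 x2] x3]. unfold pdist, pnorm, padd, pscale; cbn. f_equal; ring. Qed.

Lemma pdist_ge0 x y : 0 <= pdist x y.
Proof. rewrite pdist_eq. apply sqrt_pos. Qed.

Lemma Rabs_coord_le_pdist k x y : Rabs (coord k x - coord k y) <= pdist x y.
Proof.
  rewrite pdist_eq, <- sqrt_Rsqr_abs. apply sqrt_le_1_alt. unfold Rsqr.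
  pose proof (pow2_ge_0 (coord 0 x - coord 0 y)); pose proof (pow2_ge_0 (coord 1 x - coord 1 y));
  pose proof (pow2_ge_0 (coord 2 x - coord 2 y)).
  destruct k as [|[|k]]; cbn [coord] in *; nra.
Qed.

Definition in_tetra (x : pt) : Prop :=
  0 <= coord 0 x /\ 0 <= coord 1 x /\ coord 0 x + coord 1 x <= coord 2 x /\ coord 2 x <= a6.

Lemma in_tetra_P i : in_tetra (P i).
Proof.
  pose proof a6_pos. unfold in_tetra; rewrite !coord_P.
  destruct i as [|[|[|i]]]; cbn; lra.
Qed.

Lemma in_tetra_fmap i x : in_tetra x -> in_tetra (fmap i x).
Proof. pose proof (in_tetra_P i). unfold in_tetra in *; rewrite !coord_fmap. lra. Qed.

Lemma in_tetra_fmap_inv i x : in_tetra (fmap_inv i x) -> in_tetra x.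
Proof.
  intros H. replace x with (fmap i (fmap_inv i x)) by (apply fmap_eq_iff; reflexivity).
  apply in_tetra_fmap; auto.
Qed.

Lemma fmap_inv_P_not_in_tetra i k : (i < 4)%nat -> (k < 4)%nat -> i <> k ->
  ~ in_tetra (fmap_inv i (P k)).
Proof.
  intros Hi Hk Hik H. unfold in_tetra in H. rewrite !coord_fmap_inv, !coord_P in H. pose proof a6_pos.
  destruct i as [|[|[|[|]]]], k as [|[|[|[|]]]]; try lia; cbn in H; lra.
Qed.

(** [in_tetra (fmap_inv i X)] says that [X] lies in the first-level cell [i]. *)
Lemma two_cells_meet i i' X : (i < 4)%nat -> (i' < 4)%nat -> i <> i' ->
  in_tetra (fmap_inv i X) -> in_tetra (fmap_inv i' X) -> X = fmap i (P i').
Proof.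
  intros Hi Hi' Hii H H'. unfold in_tetra in H, H'. rewrite !coord_fmap_inv, !coord_P in H, H'.
  pose proof a6_pos.
  apply pt_ext; rewrite coord_fmap, coord_P, coord_P;
  destruct i as [|[|[|[|]]]], i' as [|[|[|[|]]]]; try lia; cbn in *; lra.
Qed.

Lemma in_tetra_diam y z : in_tetra y -> in_tetra z -> pdist y z <= 2 * a6.
Proof.
  intros Hy Hz. pose proof a6_pos. unfold in_tetra in *. rewrite pdist_eq.
  rewrite <- (sqrt_pow2 (2 * a6)) by lra. apply sqrt_le_1_alt.
  assert ((coord 0 y - coord 0 z) ^ 2 <= a6 ^ 2) by nra.
  assert ((coord 1 y - coord 1 z) ^ 2 <= a6 ^ 2) by nra.
  assert ((coord 2 y - coord 2 z) ^ 2 <= a6 ^ 2) by nra.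
  nra.
Qed.

(** * Words and the vertex sets [V_m] *)

Definition is_word (w : list nat) : Prop := forall i, In i w -> (i < 4)%nat.

Lemma is_word_nil : is_word [].
Proof. intros i []. Qed.

Lemma is_word_app v w : is_word (v ++ w) <-> is_word v /\ is_word w.
Proof.
  unfold is_word. split.
  - intros H; split; intros i Hi; apply H, in_app_iff; auto.
  - intros [H1 H2] i Hi; apply in_app_iff in Hi as [|]; auto.
Qed.

Lemma is_word_cons i w : is_word (i :: w) <-> (i < 4)%nat /\ is_word w.
Proof. unfold is_word; cbn. split; [intros H; split; auto | intros [H1 H2] j [<-|]; auto]. Qed.

Lemma is_word_repeat j n : (j < 4)%nat -> is_word (repeat j n).
Proof. intros Hj i Hi. apply repeat_spec in Hi. subst; auto. Qed.

Lemma In_words n w : In w (words n) <-> length w = n /\ is_word w.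
Proof.
  revert w; induction n as [|n IH]; intros w; cbn [words].
  - split; [intros [<-|[]]; split; [reflexivity|apply is_word_nil]|].
    intros [H _]; destruct w; [left; reflexivity|discriminate].
  - rewrite in_flat_map. split.
    + intros [v [Hv Hw]]. apply IH in Hv as [Hl Hi]. apply in_map_iff in Hw as [i [<- Hi']].
      split; [cbn; lia|]. apply is_word_cons; split; auto. apply In_idx4; auto.
    + intros [Hl Hi]. destruct w as [|i v]; [discriminate|]. apply is_word_cons in Hi as [Hi Hv].
      exists v. split; [apply IH; cbn in Hl; split; [lia|auto]|].
      apply in_map_iff. exists i; split; auto. apply In_idx4; auto.
Qed.

Lemma words_length n w : In w (words n) -> length w = n.
Proof. intros H; apply In_words in H; tauto. Qed.

Lemma words_is_word n w : In w (words n) -> is_word w.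
Proof. intros H; apply In_words in H; tauto. Qed.

Lemma app_words m n v w : In v (words m) -> In w (words n) -> In (v ++ w) (words (m + n)).
Proof.
  rewrite !In_words. intros [Hl Hv] [Hl' Hw]. rewrite length_app, is_word_app. split; [lia|auto].
Qed.

Lemma snoc_words n w i : In w (words n) -> (i < 4)%nat -> In (w ++ [i]) (words (S n)).
Proof.
  intros Hw Hi. rewrite <- Nat.add_1_r. apply app_words; auto.
  apply In_words. split; [reflexivity|]. apply is_word_cons; split; auto using is_word_nil.
Qed.

Lemma words_S_snoc n s : In s (words (S n)) -> exists t i, s = t ++ [i] /\ In t (words n) /\ (i < 4)%nat.
Proof.
  intros Hs. apply In_words in Hs as [Hl Hs].
  destruct (exists_last (l := s)) as [t [i ->]]; [intros ->; discriminate|].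
  apply is_word_app in Hs as [Ht Hi]. apply is_word_cons in Hi as [Hi _].
  rewrite length_app in Hl. cbn in Hl. exists t, i. repeat split; auto. apply In_words; split; auto; lia.
Qed.

Lemma split_words m n v : (m <= n)%nat -> In v (words n) ->
  exists w s, v = w ++ s /\ In w (words m) /\ In s (words (n - m)).
Proof.
  intros Hmn Hv. apply In_words in Hv as [Hl Hi].
  exists (firstn m v), (skipn m v). rewrite firstn_skipn.
  rewrite <- (firstn_skipn m v), is_word_app in Hi. destruct Hi as [Hi1 Hi2].
  rewrite !In_words, length_firstn, length_skipn. repeat split; auto; lia.
Qed.

Lemma sumR_words_cons n (F : list nat -> R) :
  sumR F (words (S n)) = sumR (fun i => sumR (fun w => F (i :: w)) (words n)) idx4.
Proof.
  cbn [words]. rewrite sumR_flat_map, sumR_comm. apply sumR_ext; intros i _.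
  rewrite sumR_map. reflexivity.
Qed.

Lemma sumR_words_snoc n (F : list nat -> R) :
  sumR F (words (S n)) = sumR (fun w => sumR (fun j => F (w ++ [j])) idx4) (words n).
Proof.
  revert F; induction n as [|n IH]; intros F.
  - rewrite sumR_words_cons. cbn. unfold sumR; cbn. ring.
  - rewrite (sumR_words_cons (S n)), (sumR_words_cons n (fun w => sumR (fun j => F (w ++ [j])) idx4)).
    apply sumR_ext; intros i _. apply (IH (fun w => F (i :: w))).
Qed.

Lemma sumR_words_const n c : sumR (fun _ : list nat => c) (words n) = 4 ^ n * c.
Proof.
  induction n as [|n IH]; [unfold sumR; cbn; ring|].
  rewrite sumR_words_cons, (sumR_ext _ (fun _ => 4 ^ n * c)) by (intros; apply IH).
  rewrite sumR_idx4. cbn. ring.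
Qed.

Lemma NoDup_flat_map_disj {A B} (g : A -> list B) l :
  NoDup l -> (forall x, In x l -> NoDup (g x)) ->
  (forall x y z, In x l -> In y l -> In z (g x) -> In z (g y) -> x = y) -> NoDup (flat_map g l).
Proof.
  induction l as [|x t IH]; intros Hnd Hg Hd; cbn; [constructor|]. inversion Hnd; subst.
  apply NoDup_app; auto with datatypes.
  - apply IH; auto with datatypes. intros; eapply Hd; eauto with datatypes.
  - intros z Hz Hz'. apply in_flat_map in Hz' as [y [Hy Hz']].
    assert (x = y) by (eapply Hd; eauto with datatypes). subst. contradiction.
Qed.

Lemma NoDup_words n : NoDup (words n).
Proof.
  induction n as [|n IH]; [repeat constructor; cbn; auto|]. cbn [words].
  apply NoDup_flat_map_disj; auto.
  - intros w _. apply Injective_map_NoDup; [intros x y E; injection E; auto|apply NoDup_idx4].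
  - intros x y z _ _ Hx Hy. apply in_map_iff in Hx as [i [<- _]]. apply in_map_iff in Hy as [i' [E _]].
    injection E; auto.
Qed.

Lemma In_Vm n X : In X (Vm n) <-> exists w j, In w (words n) /\ (j < 4)%nat /\ X = fW w (P j).
Proof.
  unfold Vm. rewrite nodup_In, in_flat_map. unfold cell. split.
  - intros [w [Hw Hx]]. apply in_map_iff in Hx as [j [<- Hj]].
    exists w, j; repeat split; auto. apply In_idx4; auto.
  - intros [w [j [Hw [Hj ->]]]]. exists w; split; auto. apply in_map_iff.
    exists j; split; auto. apply In_idx4; auto.
Qed.

Lemma NoDup_Vm n : NoDup (Vm n).
Proof. apply NoDup_nodup. Qed.

Lemma fW_P_In_Vm n w j : In w (words n) -> (j < 4)%nat -> In (fW w (P j)) (Vm n).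
Proof. intros; apply In_Vm; eauto 6. Qed.

Lemma Vm_mono n m X : (n <= m)%nat -> In X (Vm n) -> In X (Vm m).
Proof.
  induction 1 as [|m _ IH]; auto. intros H. apply IH, In_Vm in H as [w [j [Hw [Hj ->]]]].
  rewrite <- fmap_P_fixed, <- fW_snoc. apply fW_P_In_Vm; auto. apply snoc_words; auto.
Qed.

Lemma P_In_V0 j : (j < 4)%nat -> In (P j) (Vm 0).
Proof. intros Hj. apply (fW_P_In_Vm 0 []); auto. left; reflexivity. Qed.

(** [fW w] maps [x] to [(x + a6 * base w) / 2 ^ |w|] coordinatewise. *)
Fixpoint base (k : nat) (w : list nat) : Z :=
  match w with
  | [] => 0
  | i :: v => base k v + 2 ^ Z.of_nat (length v) * Pcoord k i
  end.

Lemma coord_fW k w x : coord k (fW w x) = (coord k x + a6 * IZR (base k w)) / 2 ^ length w.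
Proof.
  induction w as [|i w IH]; cbn [fW fold_right base length pow].
  - cbn. field.
  - change (fold_right fmap x w) with (fW w x).
    rewrite coord_fmap, IH, coord_P, plus_IZR, mult_IZR, <- pow_IZR.
    field. apply pow_nonzero; lra.
Qed.

Lemma fW_inj w x y : fW w x = fW w y -> x = y.
Proof.
  intros H. assert (Hw : 2 ^ length w <> 0) by (apply pow_nonzero; lra).
  assert (E : forall k, coord k x = coord k y).
  { intros k. pose proof (f_equal (coord k) H) as Ek. rewrite !coord_fW in Ek.
    apply (Rmult_eq_compat_r (2 ^ length w)) in Ek. field_simplify in Ek; lra. }
  apply pt_ext; apply E.
Qed.

Lemma pdist_fW w x y : pdist (fW w x) (fW w y) = pdist x y / 2 ^ length w.
Proof.
  assert (0 < 2 ^ length w) by (apply pow_lt; lra).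
  rewrite !pdist_eq, !(coord_fW _ w x), !(coord_fW _ w y).
  set (s := (coord 0 x - coord 0 y) ^ 2 + (coord 1 x - coord 1 y) ^ 2 + (coord 2 x - coord 2 y) ^ 2).
  assert (0 <= s) by (unfold s; pose proof (pow2_ge_0 (coord 0 x - coord 0 y));
    pose proof (pow2_ge_0 (coord 1 x - coord 1 y)); pose proof (pow2_ge_0 (coord 2 x - coord 2 y)); lra).
  match goal with |- sqrt ?e = _ => replace e with (s * (/ 2 ^ length w) ^ 2) by (unfold s; field; lra) end.
  rewrite sqrt_mult_alt, sqrt_pow2 by (auto; left; apply Rinv_0_lt_compat; lra).
  unfold Rdiv; ring.
Qed.

Lemma pdist_fW_le w x y : pdist (fW w x) (fW w y) <= pdist x y.
Proof.
  rewrite pdist_fW. assert (1 <= 2 ^ length w) by (apply pow_R1_Rle; lra).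
  pose proof (pdist_ge0 x y). unfold Rdiv.
  rewrite <- (Rmult_1_r (pdist x y)) at 2. apply Rmult_le_compat_l; auto.
  rewrite <- Rinv_1. apply Rinv_le_contravar; lra.
Qed.

Lemma fW_P_eq v1 v2 j1 j2 : length v1 = length v2 ->
  (forall k, (k < 3)%nat -> (base k v1 + Pcoord k j1 = base k v2 + Pcoord k j2)%Z) ->
  fW v1 (P j1) = fW v2 (P j2).
Proof.
  intros Hl H.
  assert (E : forall k, (k < 3)%nat -> coord k (fW v1 (P j1)) = coord k (fW v2 (P j2))).
  { intros k Hk. specialize (H k Hk). apply (f_equal IZR) in H. rewrite !plus_IZR in H.
    rewrite !coord_fW, !coord_P, Hl, <- !Rmult_plus_distr_l. do 2 f_equal. lra. }
  apply pt_ext; apply E; lia.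
Qed.

Definition on_lattice (n : nat) (x : pt) : Prop :=
  forall k, exists z : Z, coord k x = a6 * IZR z / 2 ^ n.

Lemma Vm_on_lattice n X : In X (Vm n) -> on_lattice n X.
Proof.
  intros H k. apply In_Vm in H as [w [j [Hw [_ ->]]]]. rewrite <- (words_length n w Hw).
  exists (base k w + Pcoord k j)%Z. rewrite coord_fW, coord_P, plus_IZR. field. apply pow_nonzero; lra.
Qed.

(** The parity of [Pcoord k a + Pcoord k b] over [k] detects [a = b]. *)
Lemma midpoint_not_on_lattice w a b : (a < 4)%nat -> (b < 4)%nat -> a <> b ->
  ~ on_lattice (length w) (fW w (fmap a (P b))).
Proof.
  intros Ha Hb Hab Hlat.
  assert (Heven : forall k, exists z, (Pcoord k a + Pcoord k b = 2 * z)%Z).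
  { intros k. destruct (Hlat k) as [z Hz]. exists (z - base k w)%Z.
    rewrite coord_fW, coord_fmap, !coord_P in Hz. apply eq_IZR. rewrite plus_IZR, mult_IZR, minus_IZR.
    pose proof a6_pos. assert (0 < 2 ^ length w) by (apply pow_lt; lra).
    match type of Hz with ?l = ?r =>
      assert (E : a6 * (IZR (Pcoord k a) + IZR (Pcoord k b) - 2 * (IZR z - IZR (base k w)))
                  = 2 * 2 ^ length w * (l - r)) by (field; lra) end.
    rewrite Hz, Rminus_diag, Rmult_0_r in E.
    apply Rmult_integral in E as [E|E]; lra. }
  destruct (Heven 0%nat) as [z0 H0], (Heven 1%nat) as [z1 H1], (Heven 2%nat) as [z2 H2].
  destruct a as [|[|[|[|]]]], b as [|[|[|[|]]]]; cbn [Pcoord] in H0, H1, H2; lia.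
Qed.

Lemma midpoint_not_in_Vm w a b : (a < 4)%nat -> (b < 4)%nat -> a <> b ->
  ~ In (fW w (fmap a (P b))) (Vm (length w)).
Proof. intros Ha Hb Hab H. apply (midpoint_not_on_lattice w a b); auto using Vm_on_lattice. Qed.

(** The seven bounds are those satisfied by a difference of two points of the
    tetrahedron, in units of [a6]; the integer vectors obeying them are exactly
    the differences of two vertices. *)
Lemma tetra_lattice_diff e0 e1 e2 :
  (-1 <= e0 <= 1)%Z -> (-1 <= e1 <= 1)%Z -> (-1 <= e2 <= 1)%Z -> (-1 <= e0 + e1 <= 1)%Z ->
  (-1 <= e2 - e0 <= 1)%Z -> (-1 <= e2 - e1 <= 1)%Z -> (-1 <= e2 - e0 - e1 <= 1)%Z ->
  exists j1 j2, (j1 < 4)%nat /\ (j2 < 4)%nat /\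
    (Pcoord 0 j1 - Pcoord 0 j2 = e0 /\ Pcoord 1 j1 - Pcoord 1 j2 = e1 /\ Pcoord 2 j1 - Pcoord 2 j2 = e2)%Z.
Proof.
  intros B0 B1 B2 B3 B4 B5 B6.
  assert (C0 : (e0 = -1 \/ e0 = 0 \/ e0 = 1)%Z) by lia.
  assert (C1 : (e1 = -1 \/ e1 = 0 \/ e1 = 1)%Z) by lia.
  assert (C2 : (e2 = -1 \/ e2 = 0 \/ e2 = 1)%Z) by lia.
  destruct C0 as [ -> | [ -> | -> ] ], C1 as [ -> | [ -> | -> ] ], C2 as [ -> | [ -> | -> ] ]; try lia;
  let pick j1 j2 := (exists j1, j2; cbn; repeat split; lia) in
  first [pick 0%nat 0%nat | pick 0%nat 1%nat | pick 0%nat 2%nat | pick 0%nat 3%nat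
        | pick 1%nat 0%nat | pick 1%nat 2%nat | pick 1%nat 3%nat | pick 2%nat 0%nat
        | pick 2%nat 1%nat | pick 2%nat 3%nat | pick 3%nat 0%nat | pick 3%nat 1%nat
        | pick 3%nat 2%nat].
Qed.

Lemma Z_abs_le1 (q : Z) : - (3 * a6 / 2) < a6 * IZR q < 3 * a6 / 2 -> (-1 <= q <= 1)%Z.
Proof.
  intros Hq. pose proof a6_pos.
  split; apply Z.nlt_ge; intros Hc.
  - assert (IZR q <= -2) by (apply IZR_le; lia). nra.
  - assert (2 <= IZR q) by (apply IZR_le; lia). nra.
Qed.

(** The integer offset between the two cells is, up to [1/6] per coordinate,
    a difference of two points of the tetrahedron, hence a difference of two vertices. *)
Lemma close_cells_share_vertex n v1 v2 y1 y2 :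
  length v1 = n -> length v2 = n -> in_tetra y1 -> in_tetra y2 ->
  (forall k, (k < 3)%nat -> Rabs (coord k (fW v1 y1) - coord k (fW v2 y2)) < a6 / (6 * 2 ^ n)) ->
  exists j1 j2, (j1 < 4)%nat /\ (j2 < 4)%nat /\ fW v1 (P j1) = fW v2 (P j2).
Proof.
  intros L1 L2 T1 T2 Hclose. pose proof a6_pos. assert (0 < 2 ^ n) by (apply pow_lt; lra).
  set (e k := (base k v2 - base k v1)%Z).
  assert (He : forall k, (k < 3)%nat -> Rabs (coord k y1 - coord k y2 - a6 * IZR (e k)) < a6 / 6).
  { intros k Hk. specialize (Hclose k Hk). rewrite !coord_fW, L1, L2 in Hclose.
    unfold e. rewrite minus_IZR.
    replace ((coord k y1 + a6 * IZR (base k v1)) / 2 ^ n - (coord k y2 + a6 * IZR (base k v2)) / 2 ^ n)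
      with ((coord k y1 - coord k y2 - a6 * (IZR (base k v2) - IZR (base k v1))) / 2 ^ n) in Hclose
      by (field; lra).
    unfold Rdiv in Hclose. rewrite Rabs_mult, (Rabs_right (/ _)) in Hclose
      by (apply Rle_ge, Rlt_le, Rinv_0_lt_compat; lra).
    apply (Rmult_lt_compat_r (2 ^ n)) in Hclose; [|lra].
    rewrite Rmult_assoc, Rinv_l, Rmult_1_r in Hclose by lra.
    replace (a6 * / (6 * 2 ^ n) * 2 ^ n) with (a6 / 6) in Hclose by (field; lra). exact Hclose. }
  pose proof (Rabs_def2 _ _ (He 0%nat ltac:(lia))). pose proof (Rabs_def2 _ _ (He 1%nat ltac:(lia))).
  pose proof (Rabs_def2 _ _ (He 2%nat ltac:(lia))). unfold in_tetra in T1, T2.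
  destruct (tetra_lattice_diff (e 0%nat) (e 1%nat) (e 2%nat)) as [j1 [j2 [Hj1 [Hj2 [D0 [D1 D2]]]]]];
    try (apply Z_abs_le1; rewrite ?plus_IZR, ?minus_IZR; lra).
  exists j1, j2. repeat split; auto. apply fW_P_eq; [lia|].
  subst e; cbv beta in *. intros k Hk. destruct k as [|[|[|]]]; lia.
Qed.

(** * How many cells contain a point or an edge *)

Definition kron (x y : pt) : R := if pt_eq_dec x y then 1 else 0.

Lemma kron_refl x : kron x x = 1.
Proof. unfold kron; destruct pt_eq_dec; congruence. Qed.

Lemma kron_neq x y : x <> y -> kron x y = 0.
Proof. unfold kron; destruct pt_eq_dec; congruence. Qed.

Lemma kron_sym x y : kron x y = kron y x.
Proof. unfold kron. destruct (pt_eq_dec x y), (pt_eq_dec y x); congruence. Qed.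

Lemma kron_01 x y : kron x y = 0 \/ kron x y = 1.
Proof. unfold kron; destruct pt_eq_dec; auto. Qed.

Lemma kron_ge0 x y : 0 <= kron x y.
Proof. destruct (kron_01 x y) as [-> | ->]; lra. Qed.

Lemma kron_fmap i Y X : kron (fmap i Y) X = kron Y (fmap_inv i X).
Proof.
  unfold kron. destruct (pt_eq_dec (fmap i Y) X) as [e|e], (pt_eq_dec Y (fmap_inv i X)) as [e'|e'];
  auto; exfalso; [apply e' | apply e]; apply fmap_eq_iff; auto.
Qed.

Lemma kron_P_P j k : (j < 4)%nat -> (k < 4)%nat -> kron (P j) (P k) = if Nat.eq_dec j k then 1 else 0.
Proof.
  intros. destruct (Nat.eq_dec j k) as [->|Hjk]; [apply kron_refl|].
  apply kron_neq. intros E; apply P_inj in E; auto.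
Qed.

Lemma sumR_kron (l : list pt) (z : pt) (phi : pt -> R) :
  NoDup l -> In z l -> sumR (fun x => kron z x * phi x) l = phi z.
Proof.
  induction l as [|a l IH]; intros Hnd Hin; [destruct Hin|].
  inversion Hnd; subst. rewrite sumR_cons. destruct (pt_eq_dec z a) as [<-|Hza].
  - rewrite kron_refl, sumR_eq0; [ring|]. intros x Hx. rewrite kron_neq; [ring|]. congruence.
  - destruct Hin as [->|Hin]; [congruence|]. rewrite kron_neq, IH; auto; ring.
Qed.

Lemma sumR_idx4_single (F : nat -> R) i : (i < 4)%nat ->
  (forall j, (j < 4)%nat -> j <> i -> F j = 0) -> sumR F idx4 = F i.
Proof.
  intros Hi H. rewrite sumR_idx4.
  destruct i as [|[|[|[|]]]]; try lia;
  rewrite ?(H 0%nat), ?(H 1%nat), ?(H 2%nat), ?(H 3%nat) by lia; ring.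
Qed.

Lemma sumR_idx4_pair (F : nat -> R) i i' : (i < 4)%nat -> (i' < 4)%nat -> i <> i' ->
  (forall j, (j < 4)%nat -> j <> i -> j <> i' -> F j = 0) -> sumR F idx4 = F i + F i'.
Proof.
  intros Hi Hi' Hii H. rewrite sumR_idx4.
  destruct i as [|[|[|[|]]]], i' as [|[|[|[|]]]]; try lia;
  rewrite ?(H 0%nat), ?(H 1%nat), ?(H 2%nat), ?(H 3%nat) by lia; ring.
Qed.

Lemma sumR_idx4_01 (F : nat -> R) : (forall i, (i < 4)%nat -> F i = 0 \/ F i = 1) ->
  (forall i i', (i < 4)%nat -> (i' < 4)%nat -> F i <> 0 -> F i' <> 0 -> i = i') ->
  sumR F idx4 = 0 \/ sumR F idx4 = 1.
Proof.
  intros H01 Hu. destruct (classic (exists i, (i < 4)%nat /\ F i <> 0)) as [[i [Hi Fi]]|Hno].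
  - rewrite (sumR_idx4_single _ i Hi); auto.
    intros j Hj Hji. apply NNPP; intros Fj. apply Hji. eapply Hu; eauto.
  - left. apply sumR_eq0. intros i Hi. apply NNPP. intros Fi. apply Hno. exists i. rewrite <- In_idx4. auto.
Qed.

Definition vmult (n : nat) (X : pt) : R :=
  sumR (fun w => sumR (fun j => kron (fW w (P j)) X) idx4) (words n).

Lemma vmult_O X : vmult 0 X = sumR (fun j => kron (P j) X) idx4.
Proof. unfold vmult; cbn [words]. rewrite sumR_cons. unfold sumR at 2; cbn. ring. Qed.

Lemma vmult_S n X : vmult (S n) X = sumR (fun i => vmult n (fmap_inv i X)) idx4.
Proof.
  unfold vmult. rewrite sumR_words_cons. apply sumR_ext; intros i _.
  apply sumR_ext; intros w _. apply sumR_ext; intros j _. apply kron_fmap.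
Qed.

Lemma vmult_spec n : forall X,
  (forall k, (k < 4)%nat -> X = P k -> vmult n X = 1) /\
  (~ in_tetra X -> vmult n X = 0) /\
  (in_tetra X -> (forall k, (k < 4)%nat -> X <> P k) -> vmult n X = 0 \/ vmult n X = 2).
Proof.
  induction n as [|n IH]; intros X; [rewrite !vmult_O | rewrite !vmult_S]; split; [|split| |split].
  - intros k Hk ->. rewrite (sumR_idx4_single _ k Hk); [apply kron_refl|].
    intros j Hj Hjk. rewrite kron_P_P by auto. destruct Nat.eq_dec; congruence.
  - intros HT. apply sumR_eq0. intros j Hj. apply kron_neq. intros <-. apply HT, in_tetra_P.
  - intros HT Hv. left. apply sumR_eq0. intros j Hj. apply kron_neq. intros <-.
    apply In_idx4 in Hj. eapply Hv; eauto.
  - intros k Hk ->. rewrite (sumR_idx4_single _ k Hk).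
    + apply (proj1 (IH _) k Hk). symmetry. apply fmap_eq_iff, fmap_P_fixed.
    + intros j Hj Hjk. apply IH, fmap_inv_P_not_in_tetra; auto.
  - intros HT. apply sumR_eq0. intros i Hi. apply IH. intros H. apply HT. eapply in_tetra_fmap_inv; eauto.
  - intros HT Hv.
    destruct (classic (exists i, (i < 4)%nat /\ in_tetra (fmap_inv i X))) as [[i [Hi Ti]]|Hno].
    2:{ left. apply sumR_eq0. intros i Hi. apply IH. intros Ti. apply Hno.
        exists i; split; auto. apply In_idx4; auto. }
    destruct (classic (exists i', (i' < 4)%nat /\ i' <> i /\ in_tetra (fmap_inv i' X)))
      as [[i' [Hi' [Hii Ti']]]|Hno'].
    + right. assert (EX : X = fmap i (P i')) by (apply two_cells_meet; auto).
      rewrite (sumR_idx4_pair _ i i'); auto.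
      * assert (E1 : fmap_inv i X = P i') by (symmetry; apply fmap_eq_iff; auto).
        assert (E2 : fmap_inv i' X = P i) by (symmetry; apply fmap_eq_iff; rewrite fmap_P_comm; auto).
        rewrite E1, E2, (proj1 (IH (P i')) i'), (proj1 (IH (P i)) i) by auto. ring.
      * intros j Hj Hji Hji'. apply IH. intros Tj.
        assert (X = fmap i (P j)) by (apply two_cells_meet; auto).
        apply Hji', (P_inj j i'); auto. apply (fW_inj [i]). cbn. congruence.
    + rewrite (sumR_idx4_single _ i Hi).
      * apply IH; auto. intros k Hk E.
        assert (EX : X = fmap i (P k)) by (symmetry; apply fmap_eq_iff; auto).
        destruct (Nat.eq_dec k i) as [->|Hki].
        -- apply (Hv i Hi). rewrite EX, fmap_P_fixed; auto.
        -- apply Hno'. exists k; split; [auto|split; [auto|]].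
           replace (fmap_inv k X) with (P i) by (apply fmap_eq_iff; rewrite fmap_P_comm; congruence).
           apply in_tetra_P.
      * intros j Hj Hji. apply IH. intros Tj. apply Hno'. exists j; auto.
Qed.

Lemma vmult_ge1 n X : In X (Vm n) -> 1 <= vmult n X.
Proof.
  intros H. apply In_Vm in H as [w [j [Hw [Hj ->]]]]. unfold vmult.
  eapply Rle_trans; [|apply sumR_term_le with (a := w); auto].
  - eapply Rle_trans; [|apply sumR_term_le with (a := j)]; [rewrite kron_refl; lra| |apply In_idx4; auto].
    intros; apply kron_ge0.
  - intros; apply sumR_ge0; intros; apply kron_ge0.
Qed.

Lemma Vm_in_tetra n X : In X (Vm n) -> in_tetra X.
Proof.
  intros H. apply In_Vm in H as [w [j [_ [_ ->]]]].
  induction w as [|i w IH]; [apply in_tetra_P | apply in_tetra_fmap, IH].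
Qed.

Lemma vmult_junction n X : In X (Vm n) -> ~ In X (Vm 0) -> vmult n X = 2.
Proof.
  intros H H0. pose proof (vmult_ge1 n X H).
  destruct (proj2 (proj2 (vmult_spec n X))) as [C|C]; [eapply Vm_in_tetra; eauto| |lra|auto].
  intros k Hk ->. apply H0, P_In_V0; auto.
Qed.

Definition emult (n : nat) (x y : pt) : R :=
  sumR (fun w => sumR (fun j => sumR (fun k =>
    if Nat.eq_dec j k then 0 else kron (fW w (P j)) x * kron (fW w (P k)) y) idx4) idx4) (words n).

Lemma emult_O x y : emult 0 x y = sumR (fun j => sumR (fun k =>
    if Nat.eq_dec j k then 0 else kron (P j) x * kron (P k) y) idx4) idx4.
Proof. unfold emult; cbn [words]. rewrite sumR_cons. unfold sumR at 2; cbn. ring. Qed.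

Lemma emult_S n x y : emult (S n) x y = sumR (fun i => emult n (fmap_inv i x) (fmap_inv i y)) idx4.
Proof.
  unfold emult. rewrite sumR_words_cons. apply sumR_ext; intros i _.
  apply sumR_ext; intros w _. apply sumR_ext; intros j _. apply sumR_ext; intros k _.
  rewrite !fW_cons, !kron_fmap. reflexivity.
Qed.

Lemma cell_vertices_distinct w j k : (j < 4)%nat -> (k < 4)%nat -> j <> k -> fW w (P j) <> fW w (P k).
Proof. intros Hj Hk Hjk E. apply Hjk, P_inj, (fW_inj w); auto. Qed.

Lemma emult_diag n x : emult n x x = 0.
Proof.
  unfold emult. apply sumR_eq0; intros w _. apply sumR_eq0; intros j Hj. apply sumR_eq0; intros k Hk.
  apply In_idx4 in Hj, Hk. destruct Nat.eq_dec as [|Hjk]; auto.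
  destruct (pt_eq_dec (fW w (P j)) x) as [<-|Ne]; [|rewrite kron_neq; auto; ring].
  rewrite (kron_neq (fW w (P k))); [ring|]. apply not_eq_sym, cell_vertices_distinct; auto.
Qed.

Lemma emult_O_01 x y : emult 0 x y = 0 \/ emult 0 x y = 1.
Proof.
  rewrite emult_O.
  destruct (classic (exists j, (j < 4)%nat /\ x = P j)) as [[j0 [Hj0 ->]]|Hx].
  2:{ left. apply sumR_eq0. intros j Hj. apply sumR_eq0. intros k _. destruct Nat.eq_dec; [ring|].
      rewrite kron_neq; [ring|]. intros E; apply Hx. exists j. rewrite <- In_idx4. auto. }
  rewrite (sumR_idx4_single _ j0 Hj0), kron_refl.
  2:{ intros j Hj Hjj. apply sumR_eq0. intros k _. destruct Nat.eq_dec; [ring|].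
      rewrite kron_P_P by auto. destruct (Nat.eq_dec j j0); [congruence|ring]. }
  destruct (classic (exists k, (k < 4)%nat /\ y = P k)) as [[k0 [Hk0 ->]]|Hy].
  2:{ left. apply sumR_eq0. intros k Hk. destruct Nat.eq_dec; [ring|].
      rewrite kron_neq; [ring|]. intros E; apply Hy. exists k. rewrite <- In_idx4. auto. }
  rewrite (sumR_idx4_single _ k0 Hk0), kron_refl.
  - destruct Nat.eq_dec; [left|right]; ring.
  - intros k Hk Hkk. destruct Nat.eq_dec; [ring|].
    rewrite kron_P_P by auto. destruct (Nat.eq_dec k k0); [congruence|ring].
Qed.

Lemma emult_O_support x y : emult 0 x y <> 0 -> in_tetra x /\ in_tetra y.
Proof.
  rewrite emult_O. intros H. apply sumR_neq0 in H as [j [Hj H]]. apply sumR_neq0 in H as [k [Hk H]].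
  destruct Nat.eq_dec; [congruence|].
  destruct (pt_eq_dec (P j) x) as [<-|Nx]; [|rewrite kron_neq in H; auto; lra].
  destruct (pt_eq_dec (P k) y) as [<-|Ny]; [|rewrite (kron_neq (P k)) in H; auto; lra].
  split; apply in_tetra_P.
Qed.

Lemma emult_spec n : forall x y,
  (emult n x y = 0 \/ emult n x y = 1) /\ (emult n x y <> 0 -> in_tetra x /\ in_tetra y).
Proof.
  induction n as [|n IH]; intros x y; [split; [apply emult_O_01|apply emult_O_support]|].
  rewrite emult_S. split.
  - apply sumR_idx4_01; [intros i _; apply IH|].
    intros i i' Hi Hi' Ni Ni'. apply NNPP; intros Hii.
    destruct (proj2 (IH _ _) Ni) as [Tx Ty], (proj2 (IH _ _) Ni') as [Tx' Ty'].
    rewrite (two_cells_meet i i' x), <- (two_cells_meet i i' y), emult_diag in Ni; auto.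
  - intros Hn. apply sumR_neq0 in Hn as [i [Hi Hn]]. apply IH in Hn as [Tx Ty].
    split; eapply in_tetra_fmap_inv; eauto.
Qed.

Lemma inb_In X l : inb X l = true <-> In X l.
Proof.
  unfold inb. rewrite existsb_exists. split.
  - intros [Y [HY E]]. destruct pt_eq_dec; [subst; auto|discriminate].
  - intros H. exists X; split; auto. destruct pt_eq_dec; congruence.
Qed.

Lemma adj_iff n x y : adj n x y = true <-> x <> y /\
  exists w j k, In w (words n) /\ (j < 4)%nat /\ (k < 4)%nat /\ x = fW w (P j) /\ y = fW w (P k).
Proof.
  unfold adj. rewrite Bool.andb_true_iff, existsb_exists.
  assert (Hcell : forall X w, In X (cell w) <-> exists j, (j < 4)%nat /\ X = fW w (P j)).
  { intros X w. unfold cell. rewrite in_map_iff. setoid_rewrite In_idx4. firstorder. }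
  split.
  - intros [H1 [w [Hw H2]]]. apply Bool.andb_true_iff in H2 as [Hx Hy].
    apply inb_In, Hcell in Hx as [j [Hj ->]]. apply inb_In, Hcell in Hy as [k [Hk ->]].
    split; [destruct pt_eq_dec; [discriminate|auto]|]. exists w, j, k; auto.
  - intros [Hxy [w [j [k [Hw [Hj [Hk [-> ->]]]]]]]]. split.
    + destruct pt_eq_dec; [contradiction|reflexivity].
    + exists w; split; auto. apply Bool.andb_true_iff; split; apply inb_In, Hcell; eauto.
Qed.

Lemma adj_irrefl n x : adj n x x = false.
Proof. unfold adj. destruct pt_eq_dec; [reflexivity|congruence]. Qed.

Lemma adj_sym n x y : adj n x y = adj n y x.
Proof.
  apply Bool.eq_iff_eq_true. rewrite !adj_iff.
  split; intros [H [w [j [k [? [? [? [? ?]]]]]]]]; split; auto; exists w, k, j; auto.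
Qed.

Lemma emult_adj n x y : emult n x y = if adj n x y then 1 else 0.
Proof.
  destruct (adj n x y) eqn:E.
  - apply adj_iff in E as [Hxy [w [j [k [Hw [Hj [Hk [-> ->]]]]]]]].
    destruct (proj1 (emult_spec n (fW w (P j)) (fW w (P k)))) as [C|C]; auto. exfalso.
    assert (Hjk : j <> k) by (intros ->; auto).
    assert (Hnn : forall w' j', 0 <= sumR (fun k' => if Nat.eq_dec j' k' then 0
                   else kron (fW w' (P j')) (fW w (P j)) * kron (fW w' (P k')) (fW w (P k))) idx4).
    { intros; apply sumR_ge0; intros; destruct Nat.eq_dec; [lra|].
      apply Rmult_le_pos; apply kron_ge0. }
    assert (1 <= emult n (fW w (P j)) (fW w (P k))); [|lra].
    unfold emult. eapply Rle_trans; [|apply sumR_term_le with (a := w); auto].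
    2:{ intros; apply sumR_ge0; auto. }
    eapply Rle_trans; [|apply sumR_term_le with (a := j); [auto|apply In_idx4; auto]].
    eapply Rle_trans; [|apply sumR_term_le with (a := k); [|apply In_idx4; auto]].
    + destruct Nat.eq_dec; [congruence|]. rewrite !kron_refl; lra.
    + intros; destruct Nat.eq_dec; [lra|]. apply Rmult_le_pos; apply kron_ge0.
  - unfold emult. apply sumR_eq0; intros w Hw. apply sumR_eq0; intros j Hj. apply sumR_eq0; intros k Hk.
    destruct Nat.eq_dec as [|Hjk]; [reflexivity|]. unfold kron.
    destruct (pt_eq_dec (fW w (P j)) x), (pt_eq_dec (fW w (P k)) y); try ring.
    exfalso. assert (adj n x y = true); [|congruence]. apply In_idx4 in Hj, Hk. apply adj_iff. split.
    + subst. apply cell_vertices_distinct; auto.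
    + exists w, j, k; auto.
Qed.

Definition addresses (n : nat) : list (list nat * nat) :=
  flat_map (fun w => map (fun j => (w, j)) idx4) (words n).

Definition address_eq_dec (p q : list nat * nat) : {p = q} + {p <> q}.
Proof. decide equality; [apply Nat.eq_dec | apply list_eq_dec, Nat.eq_dec]. Defined.

Lemma NoDup_addresses n : NoDup (addresses n).
Proof.
  apply NoDup_flat_map_disj; [apply NoDup_words| |].
  - intros w _. apply Injective_map_NoDup; [intros x y E; injection E; auto|apply NoDup_idx4].
  - intros x y z _ _ Hx Hy. apply in_map_iff in Hx as [i [<- _]]. apply in_map_iff in Hy as [i' [E _]].
    injection E; auto.
Qed.

Lemma In_addresses n w j : In (w, j) (addresses n) <-> In w (words n) /\ (j < 4)%nat.
Proof.
  unfold addresses. rewrite in_flat_map. split.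
  - intros [v [Hv Hp]]. apply in_map_iff in Hp as [i [E Hi]]. injection E as -> ->.
    split; auto. apply In_idx4; auto.
  - intros [Hw Hj]. exists w; split; auto. apply in_map_iff. exists j; split; auto. apply In_idx4; auto.
Qed.

Lemma sumR_addresses n (F : list nat -> nat -> R) :
  sumR (fun w => sumR (fun j => F w j) idx4) (words n) = sumR (fun p => F (fst p) (snd p)) (addresses n).
Proof.
  unfold addresses. rewrite sumR_flat_map. apply sumR_ext; intros w _. rewrite sumR_map. reflexivity.
Qed.

Section Midpoint.
Variables (k : nat) (u : list nat) (a b : nat).
Hypotheses (Hu : In u (words k)) (Ha : (a < 4)%nat) (Hb : (b < 4)%nat) (Hab : a <> b).

Let Y := fW u (fmap a (P b)).

Let rep1 : fW (u ++ [a]) (P b) = Y.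
Proof. apply fW_snoc. Qed.

Let rep2 : fW (u ++ [b]) (P a) = Y.
Proof. rewrite fW_snoc, fmap_P_comm. reflexivity. Qed.

Let reps_in : In (u ++ [a], b) (addresses (S k)) /\ In (u ++ [b], a) (addresses (S k)).
Proof. rewrite !In_addresses. auto using snoc_words. Qed.

Let reps_neq : (u ++ [a], b) <> (u ++ [b], a).
Proof. intros E. injection E; auto. Qed.

Let other_reps_vanish : forall p, In p (remove address_eq_dec (u ++ [b], a)
      (remove address_eq_dec (u ++ [a], b) (addresses (S k)))) ->
  kron (fW (fst p) (P (snd p))) Y = 0.
Proof.
  assert (HY : vmult (S k) Y = 2).
  { apply vmult_junction; [rewrite <- rep1; apply fW_P_In_Vm; auto using snoc_words|].
    intros H0. apply (midpoint_not_in_Vm u a b); auto.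
    rewrite (words_length k u Hu). apply (Vm_mono 0); auto; lia. }
  unfold vmult in HY. rewrite (sumR_addresses (S k) (fun w j => kron (fW w (P j)) Y)) in HY.
  destruct reps_in as [I1 I2].
  rewrite (sumR_two_terms address_eq_dec _ _ _ _ (NoDup_addresses (S k)) I1 I2 reps_neq) in HY.
  cbn [fst snd] in HY. rewrite rep1, rep2, kron_refl in HY.
  intros p Hp. apply Rle_antisym; [|apply kron_ge0].
  assert (Hrest : sumR (fun p => kron (fW (fst p) (P (snd p))) Y) (remove address_eq_dec (u ++ [b], a)
      (remove address_eq_dec (u ++ [a], b) (addresses (S k)))) = 0) by lra.
  rewrite <- Hrest. apply (sumR_term_le (fun p => kron (fW (fst p) (P (snd p))) Y)); auto.
  intros; apply kron_ge0.
Qed.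

Lemma midpoint_addresses v j : In v (words (S k)) -> (j < 4)%nat -> fW v (P j) = Y ->
  (v, j) = (u ++ [a], b) \/ (v, j) = (u ++ [b], a).
Proof.
  intros Hv Hj E.
  destruct (address_eq_dec (v, j) (u ++ [a], b)) as [|N1]; auto.
  destruct (address_eq_dec (v, j) (u ++ [b], a)) as [|N2]; auto. exfalso.
  assert (H := other_reps_vanish (v, j)). cbn [fst snd] in H. rewrite E, kron_refl in H.
  apply R1_neq_R0, H. repeat (apply in_in_remove; auto). apply In_addresses; auto.
Qed.

Lemma sumR_midpoint (G : list nat -> nat -> R) :
  sumR (fun v => sumR (fun j => kron (fW v (P j)) Y * G v j) idx4) (words (S k)) =
  G (u ++ [a]) b + G (u ++ [b]) a.
Proof.
  rewrite (sumR_addresses (S k) (fun v j => kron (fW v (P j)) Y * G v j)).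
  destruct reps_in as [I1 I2].
  rewrite (sumR_two_terms address_eq_dec _ _ _ _ (NoDup_addresses (S k)) I1 I2 reps_neq).
  cbn [fst snd]. rewrite rep1, rep2, kron_refl, sumR_eq0; [ring|].
  intros p Hp. rewrite other_reps_vanish; auto. ring.
Qed.

End Midpoint.

(** * Energies as sums over cells *)

Lemma sumR_upairs (r : pt -> pt -> bool) (F : pt -> pt -> R) l :
  (forall x, r x x = false) -> (forall x y, r x y = r y x) -> (forall x y, F x y = F y x) ->
  sumR (fun p => F (fst p) (snd p)) (filter (fun p => r (fst p) (snd p)) (upairs l)) =
  / 2 * sumR (fun x => sumR (fun y => if r x y then F x y else 0) l) l.
Proof.
  intros Hirr Hsym HF. induction l as [|x t IH]; [unfold sumR; cbn; ring|].
  cbn [upairs]. rewrite filter_app, sumR_app, IH, sumR_filter, sumR_map. cbn [fst snd].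
  rewrite !sumR_cons, Hirr.
  rewrite (sumR_ext (fun x0 => sumR (fun y => if r x0 y then F x0 y else 0) (x :: t))
            (fun x0 => (if r x0 x then F x0 x else 0) + sumR (fun y => if r x0 y then F x0 y else 0) t))
    by (intros; apply sumR_cons).
  rewrite sumR_add.
  rewrite (sumR_ext (fun x0 => if r x0 x then F x0 x else 0) (fun y => if r x y then F x y else 0))
    by (intros; rewrite Hsym, HF; reflexivity).
  field.
Qed.

Definition cellE (p q : nat -> R) : R :=
  (p 0%nat - p 1%nat) * (q 0%nat - q 1%nat) + (p 0%nat - p 2%nat) * (q 0%nat - q 2%nat) +
  (p 0%nat - p 3%nat) * (q 0%nat - q 3%nat) + (p 1%nat - p 2%nat) * (q 1%nat - q 2%nat) +
  (p 1%nat - p 3%nat) * (q 1%nat - q 3%nat) + (p 2%nat - p 3%nat) * (q 2%nat - q 3%nat).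

Definition corners (g : pt -> R) (w : list nat) (j : nat) : R := g (fW w (P j)).

Lemma cellE_sumR (p q : nat -> R) :
  cellE p q = / 2 * sumR (fun j => sumR (fun k =>
    if Nat.eq_dec j k then 0 else (p j - p k) * (q j - q k)) idx4) idx4.
Proof.
  unfold cellE. rewrite sumR_idx4; cbv beta. rewrite !sumR_idx4.
  repeat (destruct Nat.eq_dec; try lia). field.
Qed.

Lemma cellE_linear_r (p q : nat -> R) : cellE p q = sumR (fun j => q j * sumR (fun k => p j - p k) idx4) idx4.
Proof. unfold cellE. rewrite sumR_idx4; cbv beta. rewrite !sumR_idx4. ring. Qed.

Lemma cellE_quadratic (p q : nat -> R) t :
  cellE (fun j => p j + t * q j) (fun j => p j + t * q j) = cellE p p + 2 * t * cellE p q + t ^ 2 * cellE q q.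
Proof. unfold cellE. ring. Qed.

Lemma Eraw_cells n u v : Eraw n u v = sumR (fun w => cellE (corners u w) (corners v w)) (words n).
Proof.
  unfold Eraw.
  rewrite (sumR_upairs (adj n) (fun x y => (u x - u y) * (v x - v y)));
    [|apply adj_irrefl|apply adj_sym|intros; ring].
  set (D x y := (u x - u y) * (v x - v y)).
  set (c w j k x y := if Nat.eq_dec j k then 0 else kron (fW w (P j)) x * kron (fW w (P k)) y).
  transitivity (/ 2 * sumR (fun x => sumR (fun w => sumR (fun j => sumR (fun k =>
      sumR (fun y => c w j k x y * D x y) (Vm n)) idx4) idx4) (words n)) (Vm n)).
  { apply Rmult_eq_compat_l. apply sumR_ext; intros x _.
    rewrite (sumR_ext _ (fun y => sumR (fun w => sumR (fun j => sumR (fun k =>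
      c w j k x y * D x y) idx4) idx4) (words n))).
    - rewrite sumR_comm. apply sumR_ext; intros w _. rewrite sumR_comm.
      apply sumR_ext; intros j _. apply sumR_comm.
    - intros y _. transitivity (emult n x y * D x y); [rewrite emult_adj; unfold D; destruct adj; ring|].
      unfold emult. rewrite <- sumR_scal_r. apply sumR_ext; intros w _.
      rewrite <- sumR_scal_r. apply sumR_ext; intros j _. rewrite <- sumR_scal_r. reflexivity. }
  rewrite sumR_comm, <- sumR_scal_l. apply sumR_ext; intros w Hw. rewrite cellE_sumR.
  apply Rmult_eq_compat_l. rewrite sumR_comm. apply sumR_ext; intros j Hj.
  rewrite sumR_comm. apply sumR_ext; intros k Hk. apply In_idx4 in Hj, Hk. unfold c.
  destruct Nat.eq_dec; [apply sumR_eq0; intros; apply sumR_eq0; intros; ring|].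
  rewrite (sumR_ext _ (fun x => kron (fW w (P j)) x * sumR (fun y => kron (fW w (P k)) y * D x y) (Vm n)))
    by (intros x _; rewrite <- sumR_scal_l; apply sumR_ext; intros; ring).
  rewrite sumR_kron, sumR_kron; auto using fW_P_In_Vm, NoDup_Vm.
Qed.

Lemma Eraw_kron m u g X : In X (Vm m) -> (forall Y, In Y (Vm m) -> g Y = kron Y X) ->
  Eraw m u g = - Lapm m u X.
Proof.
  intros HX Hg. unfold Eraw.
  rewrite (sumR_upairs (adj m) (fun x y => (u x - u y) * (g x - g y)));
    [|apply adj_irrefl|apply adj_sym|intros; ring].
  set (du x y := if adj m x y then u x - u y else 0).
  rewrite (sumR_ext _ (fun x => kron X x * sumR (du x) (Vm m) -
                                sumR (fun y => kron X y * du x y) (Vm m))).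
  2:{ intros x Hx. rewrite <- sumR_scal_l, <- sumR_sub. apply sumR_ext; intros y Hy.
      rewrite (Hg x Hx), (Hg y Hy), !(kron_sym _ X). unfold du. destruct adj; ring. }
  rewrite sumR_sub, sumR_kron, sumR_comm by auto using NoDup_Vm.
  rewrite (sumR_ext (fun y => sumR (fun x => kron X y * du x y) (Vm m))
                   (fun y => kron X y * sumR (fun x => du x y) (Vm m))) by (intros; apply sumR_scal_l).
  rewrite sumR_kron by auto using NoDup_Vm.
  rewrite (sumR_ext (fun x => du x X) (fun y => - du X y))
    by (intros; unfold du; rewrite adj_sym; destruct adj; ring).
  unfold Lapm. rewrite sumR_filter, sumR_opp.
  rewrite (sumR_ext (fun y => if adj m X y then u y - u X else 0) (fun y => - du X y))
    by (intros; unfold du; destruct adj; ring).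
  rewrite sumR_opp. field.
Qed.

(** * The attractor and the self-similar integral *)

Section Attractor.
Variable K : pt -> Prop.
Hypothesis HK : is_attractor K.

Lemma K_fmap i y : (i < 4)%nat -> K y -> K (fmap i y).
Proof. intros Hi Hy. apply HK. exists i, y; auto. Qed.

Lemma K_fW w y : is_word w -> K y -> K (fW w y).
Proof.
  induction w as [|i w IH]; intros Hw Hy; auto. apply is_word_cons in Hw as [Hi Hw].
  apply K_fmap; auto.
Qed.

Lemma K_address x : K x -> forall n, exists w y, In w (words n) /\ K y /\ x = fW w y.
Proof.
  intros Hx n. induction n as [|n IH]; [exists [], x; split; [left|]; auto|].
  destruct IH as [w [y [Hw [Hy E]]]]. apply HK in Hy as [i [y' [Hi [Hy' ->]]]].
  exists (w ++ [i]), y'. repeat split; auto using snoc_words. rewrite E, fW_snoc. reflexivity.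
Qed.

Lemma K_split_address m x : K x -> forall k, exists w s y,
  In w (words m) /\ In s (words k) /\ K y /\ x = fW (w ++ s) y.
Proof.
  intros Hx k. destruct (K_address x Hx (m + k)) as [v [y [Hv [Hy ->]]]].
  destruct (split_words m (m + k) v) as [w [s [-> [Hw Hs]]]]; [lia|auto|].
  exists w, s, y. replace (m + k - m)%nat with k in Hs by lia. auto.
Qed.

(** [x] is within [|M| / 2 ^ N] of a vertex of [V_N] for every [N]. *)
Lemma K_in_tetra x : K x -> in_tetra x.
Proof.
  intros Hx. destruct HK as [_ [[M HM] _]].
  assert (Happrox : forall N, exists z, in_tetra z /\
    forall k, Rabs (coord k x - coord k z) <= Rabs M / 2 ^ N).
  { intros N. destruct (K_address x Hx N) as [w [y [Hw [Hy ->]]]].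
    exists (fW w (P 0)). split; [apply (Vm_in_tetra N); apply fW_P_In_Vm; auto; lia|].
    intros k. eapply Rle_trans; [apply Rabs_coord_le_pdist|]. rewrite pdist_fW, (words_length N w Hw).
    unfold Rdiv. apply Rmult_le_compat_r; [left; apply Rinv_0_lt_compat, pow_lt; lra|].
    rewrite <- pnorm_pdist. eapply Rle_trans; [apply HM; auto|apply Rle_abs]. }
  assert (Hle : forall a b, (forall N, a <= b + 3 * Rabs M / 2 ^ N) -> a <= b).
  { intros a b Hab. apply Rle_plus_epsilon. intros eps Heps.
    destruct (exists_div_pow2_lt (3 * Rabs M) eps Heps) as [N HN]. specialize (Hab N). lra. }
  assert (Hcoords : forall N, exists z, in_tetra z /\ forall k,
    coord k z - Rabs M / 2 ^ N <= coord k x <= coord k z + Rabs M / 2 ^ N).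
  { intros N. destruct (Happrox N) as [z [Hz Hd]]. exists z. split; auto.
    intros k. specialize (Hd k). apply Rabs_le_inv in Hd. lra. }
  unfold in_tetra. repeat split; [| | |].
  all: match goal with |- ?a <= ?b => apply (Hle a b) end; intros N.
  all: destruct (Hcoords N) as [z [[T0 [T1 [T2 T3]]] Hz]].
  all: pose proof (Hz 0%nat); pose proof (Hz 1%nat); pose proof (Hz 2%nat).
  all: assert (0 <= Rabs M / 2 ^ N)
         by (unfold Rdiv; apply Rmult_le_pos; [apply Rabs_pos|left; apply Rinv_0_lt_compat, pow_lt; lra]).
  all: lra.
Qed.

Lemma K_P j : (j < 4)%nat -> K (P j).
Proof.
  intros Hj. destruct HK as [[x0 Hx0] [_ [Hcl _]]].
  apply (Hcl (fun n => fW (repeat j n) x0)).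
  - intros n. apply K_fW; auto using is_word_repeat.
  - intros eps Heps. destruct (cv_pow_half (pdist x0 (P j)) eps Heps) as [N HN]. exists N.
    intros n Hn. specialize (HN n Hn). unfold R_dist in *.
    rewrite <- (fW_repeat_P j n) at 1. rewrite pdist_fW, repeat_length. exact HN.
Qed.

End Attractor.

Section Continuity.
Variable K : pt -> Prop.

Lemma contK_const c : contK K (fun _ => c).
Proof. intros x _ eps Heps. exists 1; split; [lra|]. intros. rewrite Rminus_diag, Rabs_R0; auto. Qed.

Lemma contK_fW g w : contK K g -> (forall y, K y -> K (fW w y)) -> contK K (fun x => g (fW w x)).
Proof.
  intros Hg HKw x Hx eps Heps. destruct (Hg (fW w x) (HKw x Hx) eps Heps) as [d [Hd H]].
  exists d; split; auto. intros y Hy Hyx. apply H; auto.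
  eapply Rle_lt_trans; [apply pdist_fW_le|auto].
Qed.

Lemma contK_both g h x e : contK K g -> contK K h -> K x -> 0 < e ->
  exists d, 0 < d /\ forall y, K y -> pdist y x < d -> Rabs (g y - g x) < e /\ Rabs (h y - h x) < e.
Proof.
  intros Hg Hh Hx He. destruct (Hg x Hx e He) as [d1 [Hd1 H1]], (Hh x Hx e He) as [d2 [Hd2 H2]].
  exists (Rmin d1 d2). split; [apply Rmin_pos; auto|]. intros y Hy Hyx.
  split; [apply H1 | apply H2]; auto; eapply Rlt_le_trans; eauto; [apply Rmin_l|apply Rmin_r].
Qed.

Lemma contK_add g h : contK K g -> contK K h -> contK K (fun x => g x + h x).
Proof.
  intros Hg Hh x Hx eps Heps. destruct (contK_both g h x (eps / 2) Hg Hh Hx) as [d [Hd H]]; [lra|].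
  exists d. split; auto. intros y Hy Hyx. destruct (H y Hy Hyx) as [A1 A2].
  replace (g y + h y - (g x + h x)) with ((g y - g x) + (h y - h x)) by ring.
  eapply Rle_lt_trans; [apply Rabs_triang|lra].
Qed.

Lemma contK_mult g h : contK K g -> contK K h -> contK K (fun x => g x * h x).
Proof.
  intros Hg Hh x Hx eps Heps.
  set (C := 1 + Rabs (g x) + Rabs (h x)).
  assert (HC : 1 <= C) by (unfold C; pose proof (Rabs_pos (g x)); pose proof (Rabs_pos (h x)); lra).
  set (e := Rmin 1 (eps / C)). assert (He : 0 < e) by (apply Rmin_pos; [lra|apply Rdiv_lt_0_compat; lra]).
  assert (HeC : e * C <= eps).
  { unfold e. apply (Rle_trans _ (eps / C * C)); [apply Rmult_le_compat_r; [lra|apply Rmin_r]|].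
    right. field. lra. }
  destruct (contK_both g h x e Hg Hh Hx He) as [d [Hd H]].
  exists d. split; auto. intros y Hy Hyx. destruct (H y Hy Hyx) as [A1 A2].
  assert (Hle1 : e <= 1) by apply Rmin_l.
  replace (g y * h y - g x * h x)
    with ((g y - g x) * (h y - h x) + g x * (h y - h x) + h x * (g y - g x)) by ring.
  eapply Rle_lt_trans; [apply Rabs_triang|]. eapply Rle_lt_trans; [apply Rplus_le_compat_r, Rabs_triang|].
  rewrite !Rabs_mult. pose proof (Rabs_pos (g y - g x)). pose proof (Rabs_pos (h y - h x)).
  pose proof (Rabs_pos (g x)). pose proof (Rabs_pos (h x)).
  assert (Rabs (g y - g x) * Rabs (h y - h x) < e) by nra.
  assert (Rabs (g x) * Rabs (h y - h x) <= Rabs (g x) * e) by (apply Rmult_le_compat_l; lra).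
  assert (Rabs (h x) * Rabs (g y - g x) <= Rabs (h x) * e) by (apply Rmult_le_compat_l; lra).
  unfold C in HeC. nra.
Qed.

Lemma contK_lin g h a b : contK K g -> contK K h -> contK K (fun x => a * g x + b * h x).
Proof.
  intros Hg Hh. apply contK_add; apply contK_mult; auto using contK_const.
Qed.

End Continuity.

Section Integral.
Variables (K : pt -> Prop) (I : (pt -> R) -> R).
Hypotheses (HK : is_attractor K) (HI : is_ss_integral K I).

Lemma I_lin g h a b : contK K g -> contK K h -> I (fun x => a * g x + b * h x) = a * I g + b * I h.
Proof. apply HI. Qed.

Lemma I_ge0 g : contK K g -> (forall x, K x -> 0 <= g x) -> 0 <= I g.
Proof. apply HI. Qed.

Lemma I_one : I (fun _ => 1) = 1.
Proof. apply HI. Qed.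

Lemma I_le_bound h c B : contK K h -> (forall x, K x -> Rabs (h x - c) <= B) -> Rabs (I h - c) <= B.
Proof.
  intros Hh HB. assert (Hc1 := contK_const K 1).
  assert (P1 : 0 <= I (fun x => 1 * h x + (B - c) * 1)).
  { apply I_ge0; [apply contK_lin; auto|]. intros x Hx. specialize (HB x Hx). apply Rabs_le_inv in HB. lra. }
  assert (P2 : 0 <= I (fun x => (-1) * h x + (B + c) * 1)).
  { apply I_ge0; [apply contK_lin; auto|]. intros x Hx. specialize (HB x Hx). apply Rabs_le_inv in HB. lra. }
  rewrite I_lin, I_one in P1, P2 by auto. apply Rabs_le. lra.
Qed.

Lemma I_iter n g : contK K g -> I g = (/ 4) ^ n * sumR (fun w => I (fun x => g (fW w x))) (words n).
Proof.
  revert g; induction n as [|n IH]; intros g Hg.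
  - rewrite pow_O, Rmult_1_l. cbn [words]. rewrite sumR_cons, sumR_nil, Rplus_0_r. reflexivity.
  - rewrite sumR_words_cons. destruct HI as [_ [_ [_ Hss]]]. rewrite Hss by auto.
    rewrite (sumR_ext _ (fun i => (/ 4) ^ n * sumR (fun w => I (fun x => g (fW (i :: w) x))) (words n))).
    + rewrite sumR_scal_l. cbn [pow]. ring.
    + intros i Hi. apply (IH (fun x => g (fmap i x))).
      apply (contK_fW K g [i]); auto.
      intros y Hy. change (K (fmap i y)). apply K_fmap; auto. apply In_idx4; auto.
Qed.

End Integral.

(** * Harmonic functions *)

(** Corner values of the subcell [i] of a cell with corner values [c] under
    harmonic extension: the midpoint of the edge [ij] gets [(2 c_i + 2 c_j + c_k + c_l) / 6]. *)
Definition hstep (c : nat -> R) (i j : nat) : R :=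
  if Nat.eq_dec j i then c i else (c i + c j + sumR c idx4) / 6.

Definition hext (c : nat -> R) (s : list nat) : nat -> R := fold_left hstep s c.

Definition osc_le (c : nat -> R) (D : R) : Prop :=
  forall j k, (j < 4)%nat -> (k < 4)%nat -> Rabs (c j - c k) <= D.

Definition harmonic (g : pt -> R) : Prop :=
  forall v i j, is_word v -> (i < 4)%nat -> (j < 4)%nat ->
    corners g (v ++ [i]) j = hstep (corners g v) i j.

Lemma hstep_diag c j : hstep c j j = c j.
Proof. unfold hstep. destruct Nat.eq_dec; congruence. Qed.

Lemma hstep_sym c i j : i <> j -> hstep c i j = hstep c j i.
Proof.
  intros H. unfold hstep. destruct (Nat.eq_dec j i), (Nat.eq_dec i j); try congruence. field.
Qed.

Lemma hstep_ext c c' i j : (forall k, (k < 4)%nat -> c k = c' k) -> (i < 4)%nat -> (j < 4)%nat ->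
  hstep c i j = hstep c' i j.
Proof.
  intros H Hi Hj. unfold hstep. rewrite !H, (sumR_ext c c'); auto.
  intros k Hk. apply H, In_idx4; auto.
Qed.

Lemma sumR_hstep c : sumR (fun i => sumR (hstep c i) idx4) idx4 = 4 * sumR c idx4.
Proof. rewrite sumR_idx4. unfold hstep. rewrite !sumR_idx4. cbn. field. Qed.

Lemma osc_le_ge0 c D : osc_le c D -> 0 <= D.
Proof.
  intros H. specialize (H 0%nat 0%nat ltac:(lia) ltac:(lia)). rewrite Rminus_diag, Rabs_R0 in H; auto.
Qed.

Lemma osc_le_hstep c D i : osc_le c D -> (i < 4)%nat -> osc_le (hstep c i) (2 / 3 * D).
Proof.
  intros H Hi j k Hj Hk. pose proof (osc_le_ge0 c D H).
  pose proof (Rabs_le_inv _ _ (H 0%nat 1%nat ltac:(lia) ltac:(lia))).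
  pose proof (Rabs_le_inv _ _ (H 0%nat 2%nat ltac:(lia) ltac:(lia))).
  pose proof (Rabs_le_inv _ _ (H 0%nat 3%nat ltac:(lia) ltac:(lia))).
  pose proof (Rabs_le_inv _ _ (H 1%nat 2%nat ltac:(lia) ltac:(lia))).
  pose proof (Rabs_le_inv _ _ (H 1%nat 3%nat ltac:(lia) ltac:(lia))).
  pose proof (Rabs_le_inv _ _ (H 2%nat 3%nat ltac:(lia) ltac:(lia))).
  apply Rabs_le. unfold hstep. rewrite sumR_idx4.
  destruct i as [|[|[|[|]]]], j as [|[|[|[|]]]], k as [|[|[|[|]]]]; try lia; cbn; lra.
Qed.

Lemma hstep_range c lo hi i : (forall j, (j < 4)%nat -> lo <= c j <= hi) -> (i < 4)%nat ->
  forall j, (j < 4)%nat -> lo <= hstep c i j <= hi.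
Proof.
  intros H Hi j Hj. pose proof (H 0%nat ltac:(lia)). pose proof (H 1%nat ltac:(lia)).
  pose proof (H 2%nat ltac:(lia)). pose proof (H 3%nat ltac:(lia)). unfold hstep. rewrite sumR_idx4.
  destruct i as [|[|[|[|]]]], j as [|[|[|[|]]]]; try lia; cbn; lra.
Qed.

Lemma hext_cons c i s : hext c (i :: s) = hext (hstep c i) s.
Proof. reflexivity. Qed.

Lemma hext_app c s t : hext c (s ++ t) = hext (hext c s) t.
Proof. apply fold_left_app. Qed.

Lemma hext_snoc c s i : hext c (s ++ [i]) = hstep (hext c s) i.
Proof. apply hext_app. Qed.

Lemma hext_repeat c j n : hext c (repeat j n) j = c j.
Proof.
  revert c; induction n as [|n IH]; intros c; [reflexivity|].
  cbn [repeat]. rewrite hext_cons, IH. apply hstep_diag.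
Qed.

Lemma osc_le_hext s : forall c D, osc_le c D -> is_word s -> osc_le (hext c s) ((2 / 3) ^ length s * D).
Proof.
  induction s as [|i s IH]; intros c D H Hs; [cbn; rewrite Rmult_1_l; exact H|].
  apply is_word_cons in Hs as [Hi Hs]. rewrite hext_cons. cbn [length pow].
  replace (2 / 3 * (2 / 3) ^ length s * D) with ((2 / 3) ^ length s * (2 / 3 * D)) by ring.
  apply IH; auto. apply osc_le_hstep; auto.
Qed.

Lemma hext_range s : forall c lo hi, (forall j, (j < 4)%nat -> lo <= c j <= hi) -> is_word s ->
  forall j, (j < 4)%nat -> lo <= hext c s j <= hi.
Proof.
  induction s as [|i s IH]; intros c lo hi H Hs j Hj; [apply H; auto|].
  apply is_word_cons in Hs as [Hi Hs]. rewrite hext_cons. apply IH; auto. apply hstep_range; auto.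
Qed.

Lemma hext_near c D s : osc_le c D -> is_word s ->
  forall j b, (j < 4)%nat -> (b < 4)%nat -> Rabs (hext c s j - c b) <= D.
Proof.
  intros H Hs j b Hj Hb. apply Rabs_le.
  assert (Hcb : forall k, (k < 4)%nat -> c b - D <= c k <= c b + D).
  { intros k Hk. specialize (H k b Hk Hb). apply Rabs_le_inv in H. lra. }
  pose proof (hext_range s c _ _ Hcb Hs j Hj). lra.
Qed.

Lemma harmonic_corners g v s : harmonic g -> is_word v -> is_word s ->
  forall j, (j < 4)%nat -> corners g (v ++ s) j = hext (corners g v) s j.
Proof.
  intros Hg Hv. induction s as [|i s IH] using rev_ind; intros Hs j Hj; [rewrite app_nil_r; reflexivity|].
  apply is_word_app in Hs as [Hs Hi]. apply is_word_cons in Hi as [Hi _].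
  rewrite app_assoc, Hg, hext_snoc; auto; [|apply is_word_app; auto].
  unfold hstep. rewrite !IH, (sumR_ext (corners g (v ++ s)) (hext (corners g v) s)); auto.
  intros k Hk. apply IH, In_idx4; auto.
Qed.

Lemma sumR_harmonic_corners g n : harmonic g ->
  sumR (fun w => sumR (corners g w) idx4) (words n) = 4 ^ n * sumR (fun j => g (P j)) idx4.
Proof.
  intros Hg. induction n as [|n IH].
  - cbn [words]. rewrite sumR_cons, sumR_nil, Rplus_0_r, pow_O, Rmult_1_l. reflexivity.
  - rewrite sumR_words_snoc.
    rewrite (sumR_ext _ (fun w => 4 * sumR (corners g w) idx4)); [rewrite sumR_scal_l, IH; cbn; ring|].
    intros w Hw. rewrite <- sumR_hstep. apply sumR_ext; intros i Hi. apply sumR_ext; intros j Hj.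
    apply In_idx4 in Hi, Hj. apply Hg; auto. eapply words_is_word; eauto.
Qed.

Section HarmonicIntegral.
Variables (K : pt -> Prop) (I : (pt -> R) -> R).
Hypotheses (HK : is_attractor K) (HI : is_ss_integral K I).

Lemma harmonic_osc_corners g D v : harmonic g -> osc_le (corners g []) D -> is_word v ->
  osc_le (corners g v) ((2 / 3) ^ length v * D).
Proof.
  intros Hg HD Hv j k Hj Hk. rewrite <- (app_nil_l v), !(harmonic_corners g [] v); auto using is_word_nil.
  apply osc_le_hext; auto.
Qed.

Lemma harmonic_near_corner g D v x : contK K g -> harmonic g -> osc_le (corners g []) D ->
  is_word v -> K x -> Rabs (g (fW v x) - g (fW v (P 0))) <= (2 / 3) ^ length v * D.
Proof.
  intros Hc Hg HD Hv Hx. apply Rle_plus_epsilon. intros eps Heps.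
  destruct (Hc (fW v x) (K_fW K HK v x Hv Hx) eps Heps) as [d [Hd Hcont]].
  destruct (exists_div_pow2_lt (2 * a6) d Hd) as [N HN].
  destruct (K_address K HK x Hx N) as [u [y [Hu [Hy ->]]]].
  assert (Hwu : is_word (v ++ u)) by (apply is_word_app; eauto using words_is_word).
  assert (Hnear : Rabs (g (fW (v ++ u) (P 0)) - g (fW v (fW u y))) < eps).
  { apply Hcont; [apply (K_fW K HK); auto; apply (K_P K HK); lia|].
    rewrite <- fW_app, pdist_fW, length_app, (words_length N u Hu), pow_add.
    assert (Hdiam : pdist (P 0) y <= 2 * a6)
      by (apply in_tetra_diam; [apply in_tetra_P|apply (K_in_tetra K HK); auto]).
    assert (1 <= 2 ^ length v) by (apply pow_R1_Rle; lra). assert (0 < 2 ^ N) by (apply pow_lt; lra).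
    apply (Rle_lt_trans _ (2 * a6 / 2 ^ N)); auto. unfold Rdiv.
    apply Rmult_le_compat; [apply pdist_ge0|left; apply Rinv_0_lt_compat; nra|auto|].
    apply Rinv_le_contravar; nra. }
  assert (Hcorner : Rabs (g (fW (v ++ u) (P 0)) - g (fW v (P 0))) <= (2 / 3) ^ length v * D).
  { change (Rabs (corners g (v ++ u) 0 - corners g v 0) <= (2 / 3) ^ length v * D).
    rewrite harmonic_corners by (eauto using words_is_word; lia).
    apply hext_near; [apply harmonic_osc_corners| |..]; eauto using words_is_word; lia. }
  replace (g (fW v (fW u y)) - g (fW v (P 0)))
    with (- (g (fW (v ++ u) (P 0)) - g (fW v (fW u y))) + (g (fW (v ++ u) (P 0)) - g (fW v (P 0)))) by ring.
  eapply Rle_trans; [apply Rabs_triang|]. rewrite Rabs_Ropp. lra.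
Qed.

(** On each of the [4 ^ n] cells of level [n], [g] oscillates by at most
    [(2/3)^n D], which bounds the difference of the two sides. *)
Lemma I_harmonic g : contK K g -> harmonic g -> I g = / 4 * sumR (fun j => g (P j)) idx4.
Proof.
  intros Hc Hg.
  set (D := sumR (fun j => sumR (fun k => Rabs (g (P j) - g (P k))) idx4) idx4).
  assert (HD : osc_le (corners g []) D).
  { intros j k Hj Hk. unfold D, corners. cbn [fW fold_right].
    eapply Rle_trans; [|apply sumR_term_le with (a := j); [|apply In_idx4; auto]].
    - apply (sumR_term_le (fun k => Rabs (g (P j) - g (P k)))); [intros; apply Rabs_pos|apply In_idx4; auto].
    - intros; apply sumR_ge0; intros; apply Rabs_pos. }
  apply Rminus_diag_uniq, (eq0_of_geom_bound _ (2 * D) (2 / 3)); [lra|]. intros n.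
  rewrite (I_iter K I HK HI n g Hc).
  replace (/ 4 * sumR (fun j => g (P j)) idx4)
    with ((/ 4) ^ n * sumR (fun w => / 4 * sumR (corners g w) idx4) (words n)).
  2:{ rewrite sumR_scal_l, sumR_harmonic_corners by auto.
      rewrite pow_inv. field. apply pow_nonzero; lra. }
  rewrite <- Rmult_minus_distr_l, <- sumR_sub, Rabs_mult, Rabs_right by (apply Rle_ge, pow_le; lra).
  eapply Rle_trans.
  { apply Rmult_le_compat_l; [apply pow_le; lra|]. eapply Rle_trans; [apply Rabs_sumR_le|].
    apply sumR_le with (G := fun _ => 2 * ((2 / 3) ^ n * D)). intros w Hw.
    assert (Hw' : is_word w) by eauto using words_is_word.
    rewrite <- (words_length n w Hw).
    apply (I_le_bound K I HI); [apply contK_fW; auto; intros; apply (K_fW K HK); auto|].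
    intros x Hx. pose proof (harmonic_near_corner g D w x Hc Hg HD Hw' Hx) as Hpt.
    pose proof (harmonic_osc_corners g D w Hg HD Hw') as Ho.
    pose proof (Rabs_le_inv _ _ (Ho 0%nat 1%nat ltac:(lia) ltac:(lia))).
    pose proof (Rabs_le_inv _ _ (Ho 0%nat 2%nat ltac:(lia) ltac:(lia))).
    pose proof (Rabs_le_inv _ _ (Ho 0%nat 3%nat ltac:(lia) ltac:(lia))).
    apply Rabs_le_inv in Hpt. apply Rabs_le. rewrite sumR_idx4. unfold corners in *. lra. }
  rewrite sumR_words_const, pow_inv. right. field. apply pow_nonzero; lra.
Qed.

End HarmonicIntegral.

(** * Energy minimisers are harmonic *)

Lemma quadratic_ge0_eq0 A B : (forall t, 0 <= 2 * t * A + t ^ 2 * B) -> A = 0.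
Proof.
  intros H. set (c := Rabs B + 1). pose proof (Rle_abs B). pose proof (Rabs_pos B).
  assert (Hc : 0 < c) by (unfold c; lra). specialize (H (- A / c)).
  replace (2 * (- A / c) * A + (- A / c) ^ 2 * B) with (A ^ 2 * (B - 2 * c) / c ^ 2) in H
    by (field; lra).
  assert (0 <= A ^ 2 * (B - 2 * c)).
  { replace (A ^ 2 * (B - 2 * c)) with (A ^ 2 * (B - 2 * c) / c ^ 2 * c ^ 2) by (field; lra).
    apply Rmult_le_pos; [auto|apply pow2_ge_0]. }
  assert (B - 2 * c < 0) by (unfold c; lra).
  destruct (Req_dec A 0) as [|HA]; auto. pose proof (pow_nonzero A 2 HA). pose proof (pow2_ge_0 A). nra.
Qed.

Ltac orient_midpoints H :=
  rewrite ?fmap_P_fixed, ?(fmap_P_comm 1 0), ?(fmap_P_comm 2 0), ?(fmap_P_comm 3 0),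
    ?(fmap_P_comm 2 1), ?(fmap_P_comm 3 1), ?(fmap_P_comm 3 2) in H.

Section Minimizer.
Variables (K : pt -> Prop) (m : nat) (X : pt) (psi : pt -> R).
Hypothesis Hpsi : is_psi K m X psi.

(** Perturbing [psi] at a midpoint of level [k + 1] does not change it on
    [V_k], so the energy of level [k + 1] is stationary in that direction. *)
Lemma is_psi_first_order k u a b : (m <= k)%nat -> In u (words k) -> (a < 4)%nat -> (b < 4)%nat -> a <> b ->
  sumR (fun j => corners psi (u ++ [a]) b - corners psi (u ++ [a]) j) idx4 +
  sumR (fun j => corners psi (u ++ [b]) a - corners psi (u ++ [b]) j) idx4 = 0.
Proof.
  intros Hk Hu Ha Hb Hab. destruct Hpsi as [_ [_ Hmin]].
  set (Y := fW u (fmap a (P b))).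
  assert (HY : ~ In Y (Vm k)) by (unfold Y; rewrite <- (words_length k u Hu); apply midpoint_not_in_Vm; auto).
  set (A := sumR (fun v => cellE (corners psi v) (corners (fun Z => kron Z Y) v)) (words (S k))).
  set (B := sumR (fun v => cellE (corners (fun Z => kron Z Y) v) (corners (fun Z => kron Z Y) v))
                 (words (S k))).
  assert (HA : A = 0).
  { apply (quadratic_ge0_eq0 A B). intros t.
    assert (Hw : forall Z, In Z (Vm k) -> psi Z + t * kron Z Y = psi Z).
    { intros Z HZ. rewrite kron_neq; [ring|]. intros ->. contradiction. }
    specialize (Hmin k Hk _ Hw). rewrite !Eraw_cells in Hmin.
    rewrite (sumR_ext (fun v => cellE (corners (fun Z => psi Z + t * kron Z Y) v)
                                      (corners (fun Z => psi Z + t * kron Z Y) v))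
      (fun v => cellE (corners psi v) (corners psi v) +
      2 * t * cellE (corners psi v) (corners (fun Z => kron Z Y) v) +
      t ^ 2 * cellE (corners (fun Z => kron Z Y) v) (corners (fun Z => kron Z Y) v))) in Hmin
      by (intros; apply cellE_quadratic).
    rewrite !sumR_add, !sumR_scal_l in Hmin. fold A B in Hmin. lra. }
  unfold A in HA.
  rewrite (sumR_ext _ (fun v => sumR (fun j => kron (fW v (P j)) Y *
      sumR (fun j' => corners psi v j - corners psi v j') idx4) idx4)) in HA
    by (intros; rewrite cellE_linear_r; apply sumR_ext; intros; unfold corners;
        rewrite kron_sym; reflexivity).
  unfold Y in HA.
  rewrite (sumR_midpoint k u a b Hu Ha Hb Hab
             (fun v j => sumR (fun j' => corners psi v j - corners psi v j') idx4)) in HA.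
  exact HA.
Qed.

Lemma is_psi_harmonic_step k u i j : (m <= k)%nat -> In u (words k) -> (i < 4)%nat -> (j < 4)%nat ->
  corners psi (u ++ [i]) j = hstep (corners psi u) i j.
Proof.
  intros Hk Hu Hi Hj.
  assert (E01 := is_psi_first_order k u 0 1 Hk Hu ltac:(lia) ltac:(lia) ltac:(lia)).
  assert (E02 := is_psi_first_order k u 0 2 Hk Hu ltac:(lia) ltac:(lia) ltac:(lia)).
  assert (E03 := is_psi_first_order k u 0 3 Hk Hu ltac:(lia) ltac:(lia) ltac:(lia)).
  assert (E12 := is_psi_first_order k u 1 2 Hk Hu ltac:(lia) ltac:(lia) ltac:(lia)).
  assert (E13 := is_psi_first_order k u 1 3 Hk Hu ltac:(lia) ltac:(lia) ltac:(lia)).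
  assert (E23 := is_psi_first_order k u 2 3 Hk Hu ltac:(lia) ltac:(lia) ltac:(lia)).
  unfold corners in *. rewrite !sumR_idx4, !fW_snoc in E01, E02, E03, E12, E13, E23.
  orient_midpoints E01. orient_midpoints E02. orient_midpoints E03.
  orient_midpoints E12. orient_midpoints E13. orient_midpoints E23.
  unfold hstep. rewrite sumR_idx4, fW_snoc.
  destruct i as [|[|[|[|]]]], j as [|[|[|[|]]]]; try lia; cbn [Nat.eq_dec nat_rec nat_rect];
  rewrite ?fmap_P_fixed, ?(fmap_P_comm 1 0), ?(fmap_P_comm 2 0), ?(fmap_P_comm 3 0),
    ?(fmap_P_comm 2 1), ?(fmap_P_comm 3 1), ?(fmap_P_comm 3 2); lra.
Qed.

Lemma is_psi_harmonic w : In w (words m) -> harmonic (fun x => psi (fW w x)).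
Proof.
  intros Hw v i j Hv Hi Hj.
  change (psi (fW w (fW (v ++ [i]) (P j))) = hstep (corners (fun x => psi (fW w x)) v) i j).
  rewrite <- fW_app, app_assoc.
  change (corners psi ((w ++ v) ++ [i]) j = hstep (corners (fun x => psi (fW w x)) v) i j).
  rewrite (is_psi_harmonic_step (length (w ++ v))); auto.
  - apply hstep_ext; auto. intros k Hk. unfold corners. rewrite fW_app. reflexivity.
  - rewrite length_app, (words_length m w Hw). lia.
  - apply In_words. split; auto. apply is_word_app; eauto using words_is_word.
Qed.

End Minimizer.

Section DeltaIntegral.
Variables (K : pt -> Prop) (I : (pt -> R) -> R).
Hypotheses (HK : is_attractor K) (HI : is_ss_integral K I).

(** Each cell of level [m] contributes the mean of its corner values, and [X]
    is a corner of exactly two cells. *)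
Lemma I_cellwise_harmonic_kron m X g : In X (Vm m) -> ~ In X (Vm 0) -> contK K g ->
  (forall w, In w (words m) -> harmonic (fun x => g (fW w x))) ->
  (forall Y, In Y (Vm m) -> g Y = kron Y X) ->
  I g = 2 / 4 ^ (m + 1).
Proof.
  intros HX HX0 Hc Hh Hv.
  rewrite (I_iter K I HK HI m g Hc).
  rewrite (sumR_ext _ (fun w => / 4 * sumR (fun j => kron (fW w (P j)) X) idx4)).
  - rewrite sumR_scal_l. fold (vmult m X). rewrite vmult_junction, pow_inv, pow_add by auto.
    field. apply pow_nonzero; lra.
  - intros w Hw. rewrite (I_harmonic K I HK HI).
    + f_equal. apply sumR_ext; intros j Hj. apply Hv, fW_P_In_Vm; auto. apply In_idx4; auto.
    + apply contK_fW; auto. intros; apply (K_fW K HK); eauto using words_is_word.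
    + apply Hh; auto.
Qed.

End DeltaIntegral.

(** * The function [psi^m_X] *)

Lemma app_inj_length {A} (w1 w2 t1 t2 : list A) :
  length w1 = length w2 -> w1 ++ t1 = w2 ++ t2 -> w1 = w2 /\ t1 = t2.
Proof.
  revert w2; induction w1 as [|a w1 IH]; intros [|b w2] Hl E; cbn in *; try lia; auto.
  injection E as -> E. destruct (IH w2 ltac:(lia) E) as [-> ->]; auto.
Qed.

Lemma vertex_neq_midpoint v u j a b : length v = length u -> is_word v ->
  (j < 4)%nat -> (a < 4)%nat -> (b < 4)%nat -> a <> b -> fW v (P j) <> fW u (fmap a (P b)).
Proof.
  intros Hl Hv Hj Ha Hb Hab E. apply (midpoint_not_on_lattice u a b); auto.
  rewrite <- E, <- Hl. apply Vm_on_lattice, fW_P_In_Vm; auto. apply In_words; auto.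
Qed.

Lemma cells_through_point_share_vertex n v1 v2 y1 y2 :
  length v1 = n -> length v2 = n -> in_tetra y1 -> in_tetra y2 -> fW v1 y1 = fW v2 y2 ->
  exists j1 j2, (j1 < 4)%nat /\ (j2 < 4)%nat /\ fW v1 (P j1) = fW v2 (P j2).
Proof.
  intros L1 L2 T1 T2 E. apply (close_cells_share_vertex n v1 v2 y1 y2); auto.
  intros k _. rewrite E, Rminus_diag, Rabs_R0. apply Rdiv_lt_0_compat; [apply a6_pos|].
  assert (0 < 2 ^ n) by (apply pow_lt; lra). lra.
Qed.

Definition kron_corners (X : pt) (w : list nat) : nat -> R := corners (fun Y => kron Y X) w.

Lemma osc_le_kron_corners X w : osc_le (kron_corners X w) 1.
Proof.
  intros j k _ _. unfold kron_corners, corners. apply Rabs_le.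
  destruct (kron_01 (fW w (P j)) X) as [-> | ->], (kron_01 (fW w (P k)) X) as [-> | ->]; lra.
Qed.

Section Construction.
Variables (K : pt -> Prop) (m : nat) (X : pt).
Hypothesis HK : is_attractor K.

Lemma hext_kron_corners_wd n : forall w1 w2 s1 s2 j1 j2,
  In w1 (words m) -> In w2 (words m) -> In s1 (words n) -> In s2 (words n) ->
  (j1 < 4)%nat -> (j2 < 4)%nat -> fW (w1 ++ s1) (P j1) = fW (w2 ++ s2) (P j2) ->
  hext (kron_corners X w1) s1 j1 = hext (kron_corners X w2) s2 j2.
Proof.
  induction n as [|n IH]; intros w1 w2 s1 s2 j1 j2 Hw1 Hw2 Hs1 Hs2 Hj1 Hj2 E.
  - apply words_length in Hs1, Hs2. destruct s1, s2; try discriminate. rewrite !app_nil_r in E.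
    cbn. unfold kron_corners, corners. rewrite E. reflexivity.
  - destruct (words_S_snoc n s1 Hs1) as [t1 [i1 [-> [Ht1 Hi1]]]].
    destruct (words_S_snoc n s2 Hs2) as [t2 [i2 [-> [Ht2 Hi2]]]].
    rewrite !hext_snoc. rewrite !app_assoc, !fW_snoc in E.
    assert (Hv1 : In (w1 ++ t1) (words (m + n))) by (apply app_words; auto).
    assert (Hv2 : In (w2 ++ t2) (words (m + n))) by (apply app_words; auto).
    assert (Hl : length (w1 ++ t1) = length (w2 ++ t2))
      by (rewrite (words_length _ _ Hv1), (words_length _ _ Hv2); reflexivity).
    destruct (Nat.eq_dec j1 i1) as [->|D1], (Nat.eq_dec j2 i2) as [->|D2].
    + rewrite !hstep_diag, !fmap_P_fixed in *. apply IH; auto.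
    + exfalso. rewrite fmap_P_fixed in E. revert E. apply vertex_neq_midpoint; eauto using words_is_word.
    + exfalso. rewrite fmap_P_fixed in E. symmetry in E. revert E.
      apply vertex_neq_midpoint; eauto using words_is_word.
    + assert (E' : fW ((w2 ++ t2) ++ [i2]) (P j2) = fW (w1 ++ t1) (fmap i1 (P j1)))
        by (rewrite fW_snoc; auto).
      destruct (midpoint_addresses (m + n) (w1 ++ t1) i1 j1 Hv1 Hi1 Hj1 (not_eq_sym D1) _ _
        (snoc_words _ _ _ Hv2 Hi2) Hj2 E') as [Ee|Ee];
      injection Ee as Ew Ej; apply app_inj_tail in Ew as [Ew Ei]; subst;
      apply app_inj_length in Ew as [-> ->];
      try (rewrite (words_length m w1 Hw1), (words_length m w2 Hw2); reflexivity).
      * reflexivity.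
      * apply hstep_sym; auto.
Qed.

Lemma hext_kron_corners_close x w1 s1 y1 w2 s2 y2 j1 j2 :
  In w1 (words m) -> In w2 (words m) -> is_word s1 -> is_word s2 -> (length s1 <= length s2)%nat ->
  K y1 -> K y2 -> x = fW (w1 ++ s1) y1 -> x = fW (w2 ++ s2) y2 -> (j1 < 4)%nat -> (j2 < 4)%nat ->
  Rabs (hext (kron_corners X w1) s1 j1 - hext (kron_corners X w2) s2 j2) <= 2 * (2 / 3) ^ length s1.
Proof.
  intros Hw1 Hw2 Hs1 Hs2 Hle Hy1 Hy2 E1 E2 Hj1 Hj2.
  rewrite <- (firstn_skipn (length s1) s2) in Hs2, E2 |- *. set (t := firstn (length s1) s2) in *.
  set (r := skipn (length s1) s2) in *. apply is_word_app in Hs2 as [Ht Hr].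
  assert (Hlt : length t = length s1) by (apply firstn_length_le; auto).
  rewrite app_assoc, fW_app in E2.
  destruct (cells_through_point_share_vertex (m + length s1) (w1 ++ s1) (w2 ++ t) y1 (fW r y2))
    as [a [b [Ha [Hb Eab]]]].
  - rewrite length_app, (words_length m w1 Hw1); reflexivity.
  - rewrite length_app, (words_length m w2 Hw2); lia.
  - apply (K_in_tetra K HK); auto.
  - apply (K_in_tetra K HK), (K_fW K HK); auto.
  - congruence.
  - assert (C := hext_kron_corners_wd (length s1) w1 w2 s1 t a b Hw1 Hw2
        ltac:(apply In_words; auto) ltac:(apply In_words; auto) Ha Hb Eab).
    assert (O1 := osc_le_hext s1 _ _ (osc_le_kron_corners X w1) Hs1 j1 a Hj1 Ha).
    assert (O2 := hext_near _ _ r (osc_le_hext t _ _ (osc_le_kron_corners X w2) Ht) Hr j2 b Hj2 Hb).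
    rewrite <- hext_app, Hlt, <- C in O2.
    apply Rabs_le_inv in O1, O2. apply Rabs_le. lra.
Qed.

Definition psi_approx (x : pt) (v : R) : Prop :=
  forall w s y j, In w (words m) -> is_word s -> K y -> x = fW (w ++ s) y -> (j < 4)%nat ->
    Rabs (v - hext (kron_corners X w) s j) <= 3 * (2 / 3) ^ length s.

Lemma psi_approx_exists x : K x -> exists v, psi_approx x v.
Proof.
  intros Hx.
  assert (Hsel : forall k, exists p : list nat * list nat * pt, In (fst (fst p)) (words m) /\
     In (snd (fst p)) (words k) /\ K (snd p) /\ x = fW (fst (fst p) ++ snd (fst p)) (snd p)).
  { intros k. destruct (K_split_address K HK m x Hx k) as [w [s [y H]]]. exists (w, s, y); exact H. }
  destruct (choice _ Hsel) as [sel Psel].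
  set (a k := hext (kron_corners X (fst (fst (sel k)))) (snd (fst (sel k))) 0%nat).
  assert (Hab : forall k l, (k <= l)%nat -> Rabs (a k - a l) <= 2 * (2 / 3) ^ k).
  { intros k l Hkl. destruct (Psel k) as [Wk [Sk [Yk Ek]]], (Psel l) as [Wl [Sl [Yl El]]].
    replace ((2 / 3) ^ k) with ((2 / 3) ^ length (snd (fst (sel k))))
      by (rewrite (words_length k _ Sk); auto).
    apply (hext_kron_corners_close x _ _ (snd (sel k)) _ _ (snd (sel l))); eauto using words_is_word.
    rewrite (words_length k _ Sk), (words_length l _ Sl); auto. }
  assert (Hc : Cauchy_crit a).
  { intros eps Heps. destruct (exists_pow_lt (2 / 3) (eps / 2)) as [N HN]; [lra|lra|]. exists N.
    intros n1 n2 H1 H2. unfold R_dist.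
    assert (Hdec : forall k, (N <= k)%nat -> 2 * (2 / 3) ^ k < eps)
      by (intros k Hk; pose proof (pow_le_pow_lt1 (2 / 3) N k ltac:(lra) Hk); lra).
    destruct (Nat.le_ge_cases n1 n2) as [H|H].
    - specialize (Hab n1 n2 H). specialize (Hdec n1 H1). lra.
    - specialize (Hab n2 n1 H). rewrite Rabs_minus_sym. specialize (Hdec n2 H2). lra. }
  destruct (R_complete a Hc) as [v Hv]. exists v.
  intros w s y j Hw Hs Hy Exy Hj. apply Rle_plus_epsilon. intros eps Heps.
  destruct (Hv eps Heps) as [N HN]. set (l := Nat.max N (length s)).
  specialize (HN l ltac:(unfold l; lia)). unfold R_dist in HN.
  destruct (Psel l) as [Wl [Sl [Yl El]]].
  assert (C := hext_kron_corners_close x w s y _ _ _ j 0%nat Hw Wl Hs (words_is_word _ _ Sl)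
    ltac:(rewrite (words_length l _ Sl); unfold l; lia) Hy Yl Exy El Hj ltac:(lia)).
  fold (a l) in C. pose proof (pow_le (2 / 3) (length s) ltac:(lra)).
  replace (v - hext (kron_corners X w) s j) with (- (a l - v) - (hext (kron_corners X w) s j - a l)) by ring.
  eapply Rle_trans; [apply Rabs_triang|]. rewrite Rabs_Ropp, Rabs_Ropp. lra.
Qed.

End Construction.

Definition psiX (K : pt -> Prop) (m : nat) (X : pt) (x : pt) : R :=
  epsilon (inhabits 0) (psi_approx K m X x).

Section PsiProperties.
Variables (K : pt -> Prop) (m : nat) (X : pt).
Hypothesis HK : is_attractor K.

Notation psi := (psiX K m X).

Lemma psiX_approx x : K x -> psi_approx K m X x (psi x).
Proof. intros Hx. unfold psiX. apply epsilon_spec, psi_approx_exists; auto. Qed.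

Lemma psiX_vertex w s j : In w (words m) -> is_word s -> (j < 4)%nat ->
  psi (fW (w ++ s) (P j)) = hext (kron_corners X w) s j.
Proof.
  intros Hw Hs Hj. assert (HZ : K (fW (w ++ s) (P j))).
  { apply (K_fW K HK); [apply is_word_app; eauto using words_is_word|apply (K_P K HK); auto]. }
  apply Rminus_diag_uniq, (eq0_of_geom_bound _ 3 (2 / 3)); [lra|]. intros l.
  assert (E : fW (w ++ s) (P j) = fW (w ++ (s ++ repeat j l)) (P j))
    by (rewrite app_assoc, (fW_app (w ++ s)), fW_repeat_P; reflexivity).
  assert (Hr : is_word (s ++ repeat j l)) by (apply is_word_app; auto using is_word_repeat).
  specialize (psiX_approx _ HZ w (s ++ repeat j l) (P j) j Hw Hr (K_P K HK j Hj) E Hj) as Ch.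
  rewrite hext_app, hext_repeat, length_app, pow_add, repeat_length in Ch.
  pose proof (pow_le (2 / 3) (length s) ltac:(lra)). pose proof (pow_le (2 / 3) l ltac:(lra)).
  pose proof (pow_le_pow_lt1 (2 / 3) 0 (length s) ltac:(lra) ltac:(lia)). cbn [pow] in *. nra.
Qed.

Lemma psiX_on_Vm Y : In Y (Vm m) -> psi Y = kron Y X.
Proof.
  intros HY. apply In_Vm in HY as [w [j [Hw [Hj ->]]]].
  rewrite <- (app_nil_r w) at 1. rewrite psiX_vertex; auto using is_word_nil.
Qed.

Lemma psiX_cont : contK K psi.
Proof.
  intros x Hx eps Heps.
  destruct (exists_pow_lt (2 / 3) (eps / 6)) as [k Hk]; [lra|lra|].
  pose proof a6_pos. assert (0 < 2 ^ (m + k)) by (apply pow_lt; lra).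
  exists (a6 / (6 * 2 ^ (m + k))). split; [apply Rdiv_lt_0_compat; lra|].
  intros y Hy Hyx.
  destruct (K_split_address K HK m x Hx k) as [w1 [s1 [y1 [Hw1 [Hs1 [Hy1 E1]]]]]].
  destruct (K_split_address K HK m y Hy k) as [w2 [s2 [y2 [Hw2 [Hs2 [Hy2 E2]]]]]].
  destruct (close_cells_share_vertex (m + k) (w1 ++ s1) (w2 ++ s2) y1 y2) as [a [b [Ha [Hb Eab]]]].
  - rewrite length_app, (words_length m w1 Hw1), (words_length k s1 Hs1); reflexivity.
  - rewrite length_app, (words_length m w2 Hw2), (words_length k s2 Hs2); reflexivity.
  - apply (K_in_tetra K HK); auto.
  - apply (K_in_tetra K HK); auto.
  - intros j _. rewrite <- E1, <- E2, Rabs_minus_sym. eapply Rle_lt_trans; [apply Rabs_coord_le_pdist|auto].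
  - assert (C := hext_kron_corners_wd m X k w1 w2 s1 s2 a b Hw1 Hw2 Hs1 Hs2 Ha Hb Eab).
    assert (Cx := psiX_approx x Hx w1 s1 y1 a Hw1 (words_is_word _ _ Hs1) Hy1 E1 Ha).
    assert (Cy := psiX_approx y Hy w2 s2 y2 b Hw2 (words_is_word _ _ Hs2) Hy2 E2 Hb).
    rewrite (words_length k s1 Hs1) in Cx. rewrite (words_length k s2 Hs2) in Cy.
    apply Rabs_le_inv in Cx, Cy. apply Rabs_def1; lra.
Qed.

Lemma psiX_harmonic w : In w (words m) -> harmonic (fun x => psi (fW w x)).
Proof.
  intros Hw v i j Hv Hi Hj. unfold corners. rewrite <- fW_app, psiX_vertex, hext_snoc; auto.
  - apply hstep_ext; auto. intros k Hk. rewrite <- fW_app, psiX_vertex; auto.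
  - apply is_word_app; split; auto. apply is_word_cons; split; auto using is_word_nil.
Qed.

Lemma Eraw_psiX_step n g : (m <= n)%nat -> Eraw (S n) g psi = 2 / 3 * Eraw n g psi.
Proof.
  intros Hmn. rewrite !Eraw_cells, sumR_words_snoc, <- sumR_scal_l. apply sumR_ext; intros v Hv.
  destruct (split_words m n v Hmn Hv) as [w [s [-> [Hw Hs]]]].
  assert (His : is_word s) by eauto using words_is_word.
  assert (Hsnoc : forall i j, (i < 4)%nat -> (j < 4)%nat ->
    corners psi ((w ++ s) ++ [i]) j = hstep (hext (kron_corners X w) s) i j).
  { intros i j Hi Hj. unfold corners. rewrite <- app_assoc, psiX_vertex, hext_snoc; auto.
    apply is_word_app; split; auto. apply is_word_cons; split; auto using is_word_nil. }
  assert (Hcell : forall j, (j < 4)%nat -> corners psi (w ++ s) j = hext (kron_corners X w) s j)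
    by (intros; apply psiX_vertex; auto).
  rewrite sumR_idx4. unfold cellE.
  rewrite !Hsnoc, !Hcell by lia. unfold corners. rewrite !fW_snoc.
  rewrite ?fmap_P_fixed, ?(fmap_P_comm 1 0), ?(fmap_P_comm 2 0), ?(fmap_P_comm 3 0),
    ?(fmap_P_comm 2 1), ?(fmap_P_comm 3 1), ?(fmap_P_comm 3 2).
  unfold hstep. rewrite !sumR_idx4. cbn [Nat.eq_dec nat_rec nat_rect]. field.
Qed.

Lemma Em_psiX_const n g : (m <= n)%nat -> Em n g psi = Em m g psi.
Proof.
  induction 1 as [|n Hmn IH]; [reflexivity|]. rewrite <- IH. unfold Em.
  rewrite Eraw_psiX_step by auto. cbn [pow]. field.
Qed.

Lemma psiX_ge0 x : K x -> 0 <= psi x.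
Proof.
  intros Hx. apply Rnot_lt_le. intros Hneg.
  destruct (exists_pow_lt (2 / 3) (- psi x / 3)) as [k Hk]; [lra|lra|].
  destruct (K_split_address K HK m x Hx k) as [w [s [y [Hw [Hs [Hy E]]]]]].
  assert (C := psiX_approx x Hx w s y 0%nat Hw (words_is_word _ _ Hs) Hy E ltac:(lia)).
  rewrite (words_length k s Hs) in C.
  assert (R := hext_range s (kron_corners X w) 0 1
    ltac:(intros j _; unfold kron_corners, corners; destruct (kron_01 (fW w (P j)) X) as [-> | ->]; lra)
    (words_is_word _ _ Hs) 0%nat ltac:(lia)).
  apply Rabs_le_inv in C. lra.
Qed.

Lemma psiX_support x : K x -> psi x <> 0 -> pdist x X <= 2 * a6 / 2 ^ m.
Proof.
  intros Hx Hne. destruct (K_split_address K HK m x Hx 0) as [w [s0 [y [Hw [Hs0 [Hy E]]]]]].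
  apply words_length in Hs0. destruct s0; [|discriminate]. rewrite app_nil_r in E.
  destruct (classic (exists j, (j < 4)%nat /\ fW w (P j) = X)) as [[j [Hj EX]]|Hno].
  - rewrite E, <- EX, pdist_fW, (words_length m w Hw). unfold Rdiv. apply Rmult_le_compat_r.
    + left; apply Rinv_0_lt_compat, pow_lt; lra.
    + apply in_tetra_diam; [apply (K_in_tetra K HK); auto|apply in_tetra_P].
  - (* All corner values of the cell [w] vanish, hence so do their harmonic extensions. *)
    exfalso. apply Hne, (eq0_of_geom_bound _ 3 (2 / 3)); [lra|]. intros k.
    destruct (K_address K HK y Hy k) as [s [y' [Hs [Hy' Ey]]]].
    assert (E' : x = fW (w ++ s) y') by (rewrite E, Ey, fW_app; reflexivity).
    assert (C := psiX_approx x Hx w s y' 0%nat Hw (words_is_word _ _ Hs) Hy' E' ltac:(lia)).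
    rewrite (words_length k s Hs) in C.
    assert (R := hext_range s (kron_corners X w) 0 0
      ltac:(intros j Hj; unfold kron_corners, corners; rewrite kron_neq; [lra|]; intros Ej; apply Hno; eauto)
      (words_is_word _ _ Hs) 0%nat ltac:(lia)).
    replace (hext (kron_corners X w) s 0%nat) with 0 in C by lra. rewrite Rminus_0_r in C. exact C.
Qed.

End PsiProperties.

(** * The pointwise formula for the Laplacian *)

Lemma Un_cv_eventually_const (v : nat -> R) N c : (forall n, (N <= n)%nat -> v n = c) -> Un_cv v c.
Proof.
  intros H eps Heps. exists N. intros n Hn. unfold R_dist. rewrite H, Rminus_diag, Rabs_R0 by lia. auto.
Qed.

Section Laplacian.
Variables (K : pt -> Prop) (I : (pt -> R) -> R).
Hypotheses (HK : is_attractor K) (HI : is_ss_integral K I).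

Lemma I_psiX m X : In X (Vm m) -> ~ In X (Vm 0) -> I (psiX K m X) = 2 / 4 ^ (m + 1).
Proof.
  intros HX HX0. apply (I_cellwise_harmonic_kron K I HK HI m X); auto.
  - apply psiX_cont; auto.
  - intros; apply psiX_harmonic; auto.
  - intros; apply psiX_on_Vm; auto.
Qed.

(** Uses that [psi^m_X] is nonnegative and vanishes farther than [2 a6 / 2 ^ m] from [X]. *)
Lemma I_psiX_localized m X f eps : contK K f ->
  (forall x, K x -> pdist x X <= 2 * a6 / 2 ^ m -> Rabs (f x - f X) <= eps) ->
  Rabs (I (fun x => psiX K m X x * f x) - f X * I (psiX K m X)) <= eps * I (psiX K m X).
Proof.
  intros Hf Hloc. set (psi := psiX K m X).
  assert (Cp : contK K psi) by (apply psiX_cont; auto).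
  assert (Cpf : contK K (fun x => psi x * f x)) by (apply contK_mult; auto).
  set (g := fun x => 1 * (psi x * f x) + - f X * psi x).
  assert (Cg : contK K g) by (apply contK_lin; auto).
  assert (Hg : forall x, K x -> - (eps * psi x) <= g x <= eps * psi x).
  { intros x Hx. unfold g. assert (0 <= psi x) by (apply psiX_ge0; auto).
    destruct (Req_dec (psi x) 0) as [Z|Z]; [rewrite Z; lra|].
    assert (B := Hloc x Hx (psiX_support K m X HK x Hx Z)). apply Rabs_le_inv in B.
    replace (1 * (psi x * f x) + - f X * psi x) with (psi x * (f x - f X)) by ring. nra. }
  assert (P1 := I_ge0 K I HI (fun x => eps * psi x + (-1) * g x) (contK_lin K _ _ _ _ Cp Cg)
    ltac:(intros x Hx; specialize (Hg x Hx); lra)).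
  assert (P2 := I_ge0 K I HI (fun x => eps * psi x + 1 * g x) (contK_lin K _ _ _ _ Cp Cg)
    ltac:(intros x Hx; specialize (Hg x Hx); lra)).
  rewrite (I_lin K I HI) in P1, P2 by auto. unfold g in P1, P2. rewrite (I_lin K I HI) in P1, P2 by auto.
  apply Rabs_le. lra.
Qed.

(** Testing the weak Laplacian against [psi^m_X] turns [E(u, psi^m_X)] into
    [-(3/2)^m Lapm m u X], since the energies of [psi^m_X] stabilise from level [m]. *)
Lemma Lapm_as_integral u f X m0 : is_Laplacian K I u f -> In X (Vm m0) -> ~ In X (Vm 0) ->
  forall m, (m0 <= m)%nat -> 6 ^ m * Lapm m u X = 4 ^ m * I (fun x => psiX K m X x * f x).
Proof.
  intros [_ [_ HL]] Hm0 HX0 m Hm. set (psi := psiX K m X).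
  assert (HXm : In X (Vm m)) by (apply (Vm_mono m0); auto).
  assert (Hd : dom0E K psi).
  { split; [split|].
    - apply psiX_cont; auto.
    - exists (Em m psi psi). apply (Un_cv_eventually_const _ m). intros n Hn. apply Em_psiX_const; auto.
    - intros Y HY. unfold psi. rewrite psiX_on_Vm by (auto; apply (Vm_mono 0); auto; lia).
      apply kron_neq. intros ->. contradiction. }
  assert (Hc : Un_cv (fun n => Em n u psi) (Em m u psi))
    by (apply (Un_cv_eventually_const _ m); intros n Hn; apply Em_psiX_const; auto).
  assert (E := UL_sequence _ _ _ (HL psi Hd) Hc).
  unfold Em in E. rewrite (Eraw_kron m u psi X HXm) in E by (intros; apply psiX_on_Vm; auto).
  replace (6 ^ m) with (4 ^ m * (3 / 2) ^ m) by (rewrite <- Rpow_mult_distr; f_equal; lra).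
  rewrite Rmult_assoc. f_equal. lra.
Qed.

Theorem Lapm_limit u f : is_Laplacian K I u f -> forall X, Vstar X -> ~ In X (Vm 0) ->
  Un_cv (fun m => 6 ^ m * Lapm m u X) (f X / 2).
Proof.
  intros HL X [m0 Hm0] HX0. pose proof HL as [_ [Hf _]].
  assert (KX : K X).
  { apply In_Vm in Hm0 as [w [j [Hw [Hj ->]]]].
    apply (K_fW K HK); eauto using words_is_word. apply (K_P K HK); auto. }
  intros eps Heps. destruct (Hf X KX eps Heps) as [d [Hd Hfd]].
  destruct (exists_div_pow2_lt (2 * a6) d Hd) as [N HN].
  exists (Nat.max m0 N). intros m Hm. unfold R_dist.
  rewrite (Lapm_as_integral u f X m0 HL Hm0 HX0 m) by lia.
  assert (HXm : In X (Vm m)) by (apply (Vm_mono m0); auto; lia).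
  assert (Hloc : forall x, K x -> pdist x X <= 2 * a6 / 2 ^ m -> Rabs (f x - f X) <= eps).
  { intros x Hx Hdx. left. apply Hfd; auto. eapply Rle_lt_trans; [exact Hdx|].
    eapply Rle_lt_trans; [|exact HN]. unfold Rdiv. apply Rmult_le_compat_l; [pose proof a6_pos; lra|].
    apply Rinv_le_contravar; [apply pow_lt; lra|]. apply Rle_pow; [lra|lia]. }
  assert (B := I_psiX_localized m X f eps Hf Hloc).
  rewrite (I_psiX m X HXm HX0) in B.
  assert (H4 : 0 < 4 ^ m) by (apply pow_lt; lra).
  replace (4 ^ m * I (fun x => psiX K m X x * f x) - f X / 2) with
    (4 ^ m * (I (fun x => psiX K m X x * f x) - f X * (2 / 4 ^ (m + 1)))) by (rewrite pow_add; field; lra).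
  rewrite Rabs_mult, Rabs_right by lra.
  apply Rle_lt_trans with (4 ^ m * (eps * (2 / 4 ^ (m + 1)))).
  - apply Rmult_le_compat_l; lra.
  - rewrite pow_add. field_simplify; lra.
Qed.

End Laplacian.

Theorem mainTheorem7 (K : pt -> Prop) (I : (pt -> R) -> R)
  (HK : is_attractor K) (HI : is_ss_integral K I) :
  (forall (m : nat) (X : pt) (psi : pt -> R),
      (1 <= m)%nat -> In X (Vm m) -> ~ In X (Vm 0) -> is_psi K m X psi ->
      I psi = 2 / 4 ^ (m + 1))
  /\
  (forall (u f : pt -> R), is_Laplacian K I u f ->
     forall X : pt, Vstar X -> ~ In X (Vm 0) ->
       exists l, Un_cv (fun m => 6 ^ m * Lapm m u X) l /\ f X = 2 * l).
Proof.
  split.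
  - intros m X psi _ HX HX0 Hpsi. pose proof Hpsi as [Hc [Hv _]].
    apply (I_cellwise_harmonic_kron K I HK HI m X); auto.
    + intros w Hw. apply (is_psi_harmonic K m X psi); auto.
    + intros Y HY. rewrite Hv by auto. apply kron_sym.
  - intros u f HL X HX HX0. exists (f X / 2). split; [apply (Lapm_limit K I HK HI); auto | field].
Qed.
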